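(* Consider Algorithm P-ASY-SUM-PUSH described in the context, run over a strongly connected digraph $\mathcal G$ with a column-stochastic matrix $A$ compatible with $\mathcal G$ with parameter $\bar m$, under an activation/delay sequence $(i^k,\mathbf d^k)_{k\in\mathbb N_0}$ satisfying the asynchrony model with constants $T,D$, and with an arbitrary perturbation sequence $\{\boldsymbol\epsilon^k\}_{k\in\mathbb N_0}\subset\mathbb R^n$. Let $K_1=(2I-1)T+ID$. Then there exist constants $\rho\in(0,1)$ and $C_1>0$ (depending only on $\bar m,I,T,D,|\mathcal E|$) such that for all $i\in\mathcal V$ and all $k\ge K_1-1$, $$\Big\|\mathbf y_i^{k+1}-\tfrac1I\,\mathfrak m_z^{k+1}\Big\|\le C_1\Big(\rho^k\|\mathbf z^0\|+\sum_{l=0}^k\rho^{k-l}\|\boldsymbol\epsilon^l\|\Big),$$ where $\|\mathbf z^0\|$ is the Euclidean norm of the stacked vector $(\mathbf z_1^0,\dots,\mathbf z_I^0)$. Moreover, for every $k\in\mathbb N_0$, $\mathfrak m_z^k=\sum_{i=1}^I\mathbf z_i^0+\sum_{t=0}^{k-1}\boldsymbol\epsilon^t$.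
   Context: Graph: $\mathcal G=(\mathcal V,\mathcal E)$, $\mathcal V=\{1,\dots,I\}$, is a strongly connected directed graph without self-loops; $(j,i)\in\mathcal E$ means agent $j$ can send information to agent $i$; $\mathcal N_i^{\rm in}=\{j:(j,i)\in\mathcal E\}$, $\mathcal N_i^{\rm out}=\{j:(i,j)\in\mathcal E\}$. A matrix $M=(m_{ij})\in\mathbb R^{I\times I}$ is compatible with $\mathcal G$ with parameter $\bar m\in(0,1)$ if $m_{ii}\ge\bar m$ for all $i$, $m_{ij}\ge\bar m$ for all $(j,i)\in\mathcal E$, and $m_{ij}=0$ otherwise. $A=(a_{ij})$ is compatible with $\mathcal G$ and column-stochastic ($\mathbf 1^\top A=\mathbf 1^\top$). Asynchrony model: a sequence $(i^k,\mathbf d^k)_{k\in\mathbb N_0}$ with $i^k\in\mathcal V$ and $\mathbf d^k=(d_j^k)_{j\in\mathcal N^{\rm in}_{i^k}}$ such that (i) there is an integer $T\ge1$ with $\bigcup_{t=k}^{k+T-1}\{i^t\}=\mathcal V$ for all $k\in\mathbb N_0$; (ii) there is an integer $D\ge 1$ with $0\le d_j^k\le D$ for all $k$ and $j\in\mathcal N^{\rm in}_{i^k}$. Algorithm P-ASY-SUM-PUSH. Variables: for each $i$, $\mathbf z_i\in\mathbb R^n$, $\phi_i\in\mathbb R$; for each $(j,i)\in\mathcal E$: $\boldsymbol\rho_{ij}\in\mathbb R^n$, $\sigma_{ij}\in\mathbb R$ (cumulative mass sent from $j$ to $i$), buffers $\tilde{\boldsymbol\rho}_{ij},\tilde\sigma_{ij}$,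 and an integer $\tau_{ij}$. Initialization: $\mathbf z_i^0\in\mathbb R^n$ arbitrary, $\phi_i^0=1$, $\tilde{\boldsymbol\rho}_{ij}^0=0$, $\tilde\sigma_{ij}^0=0$, $\tau_{ij}^{-1}=-D$, and $\boldsymbol\rho_{ij}^t=0$, $\sigma_{ij}^t=0$ for $t=-D,\dots,0$. At iteration $k$, with $i=i^k$: (1) $\tau_{ij}^k=\max(\tau_{ij}^{k-1},k-d_j^k)$ for $j\in\mathcal N_i^{\rm in}$; (2) $\mathbf z_i^{k+1/2}=\mathbf z_i^k+\sum_{j\in\mathcal N_i^{\rm in}}(\boldsymbol\rho_{ij}^{\tau_{ij}^k}-\tilde{\boldsymbol\rho}_{ij}^k)+\boldsymbol\epsilon^k$, $\phi_i^{k+1/2}=\phi_i^k+\sum_{j\in\mathcal N_i^{\rm in}}(\sigma_{ij}^{\tau_{ij}^k}-\tilde\sigma_{ij}^k)$; (3) $\mathbf z_i^{k+1}=a_{ii}\mathbf z_i^{k+1/2}$, $\phi_i^{k+1}=a_{ii}\phi_i^{k+1/2}$, and for $j\in\mathcal N_i^{\rm out}$: $\boldsymbol\rho_{ji}^{k+1}=\boldsymbol\rho_{ji}^k+a_{ji}\mathbf z_i^{k+1/2}$, $\sigma_{ji}^{k+1}=\sigma_{ji}^k+a_{ji}\phi_i^{k+1/2}$; (4) $\tilde{\boldsymbol\rho}_{ij}^{k+1}=\boldsymbol\rho_{ij}^{\tau_{ij}^k}$, $\tilde\sigma_{ij}^{k+1}=\sigma_{ij}^{\tau_{ij}^k}$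 for $j\in\mathcal N_i^{\rm in}$; (5) every variable not updated above keeps its value from iteration $k$ to $k+1$ (including $\tau_{i'j}^k=\tau_{i'j}^{k-1}$ for $i'\ne i^k$). Define $\mathbf y_i^k=\mathbf z_i^k/\phi_i^k$ and the total mass $\mathfrak m_z^k=\sum_{i=1}^I\mathbf z_i^k+\sum_{(j,i)\in\mathcal E}(\boldsymbol\rho_{ij}^k-\tilde{\boldsymbol\rho}_{ij}^k)$. *)

From Stdlib Require Import Reals ZArith Arith Lia.
Open Scope R_scope.

(* Vectors of R^n are represented as functions nat -> R; only the
   coordinates c < n are meaningful (the norm only looks at those). *)
Definition vec := nat -> R.
Definition vzero : vec := fun _ => 0.

Fixpoint rsum (N : nat) (f : nat -> R) : R :=
  match N with O => 0 | S N' => rsum N' f + f N' end.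

Fixpoint nsum (N : nat) (f : nat -> nat) : nat :=
  match N with O => 0%nat | S N' => (nsum N' f + f N')%nat end.

Definition vnorm (n : nat) (v : vec) : R := sqrt (rsum n (fun c => v c ^ 2)).

(* Graph on nodes 0..I-1: E j i = true means (j,i) is an edge (j sends to i). *)
Inductive reach (E : nat -> nat -> bool) : nat -> nat -> Prop :=
| reach_refl x : reach E x x
| reach_step x y w : E x y = true -> reach E y w -> reach E x w.

Definition is_digraph (I : nat) (E : nat -> nat -> bool) : Prop :=
  (forall i j, E j i = true -> (j < I)%nat /\ (i < I)%nat) /\
  (forall i, E i i = false).

Definition strongly_connected (I : nat) (E : nat -> nat -> bool) : Prop :=
  forall i j, (i < I)%nat -> (j < I)%nat -> reach E i j.

Definition num_edges (I : nat) (E : nat -> nat -> bool) : nat :=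
  nsum I (fun i => nsum I (fun j => if E j i then 1%nat else 0%nat)).

Definition compatible (I : nat) (E : nat -> nat -> bool) (mbar : R)
  (M : nat -> nat -> R) : Prop :=
  (forall i, (i < I)%nat -> mbar <= M i i) /\
  (forall i j, E j i = true -> mbar <= M i j) /\
  (forall i j, (i < I)%nat -> (j < I)%nat -> i <> j -> E j i = false -> M i j = 0).

Definition column_stochastic (I : nat) (M : nat -> nat -> R) : Prop :=
  forall j, (j < I)%nat -> rsum I (fun i => M i j) = 1.

(* Asynchrony model: act k = i^k, d k j = d_j^k. *)
Definition asynchrony (I T D : nat) (E : nat -> nat -> bool)
  (act : nat -> nat) (d : nat -> nat -> nat) : Prop :=
  (forall k, (act k < I)%nat) /\
  (forall k v, (v < I)%nat -> exists t, (k <= t < k + T)%nat /\ act t = v) /\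
  (forall k j, E j (act k) = true -> (d k j <= D)%nat).

Definition hist {X : Type} (x0 : X) (f : nat -> X) (t : Z) : X :=
  if (t <=? 0)%Z then x0 else f (Z.to_nat t).

(* tau_ij^{k-1}, with tau_ij^{-1} = -D *)
Definition tau_prev (D : nat) (tau : nat -> nat -> nat -> Z) (k i j : nat) : Z :=
  match k with O => (- Z.of_nat D)%Z | S k' => tau k' i j end.

(* Indexing: z k i = z_i^k, phi k i = phi_i^k,
   rho k i j = rho_ij^k, sig k i j = sigma_ij^k (defined for edges (j,i)),
   rhot, sigt the buffers, tau k i j = tau_ij^k. *)
Definition zhalf (I : nat) (E : nat -> nat -> bool) (eps : nat -> vec)
  (z : nat -> nat -> vec) (rho rhot : nat -> nat -> nat -> vec)
  (tau : nat -> nat -> nat -> Z) (k i : nat) : vec :=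
  fun c => z k i c
    + rsum I (fun j => if E j i
                       then hist vzero (fun t => rho t i j) (tau k i j) c - rhot k i j c
                       else 0)
    + eps k c.

Definition phihalf (I : nat) (E : nat -> nat -> bool)
  (phi : nat -> nat -> R) (sig sigt : nat -> nat -> nat -> R)
  (tau : nat -> nat -> nat -> Z) (k i : nat) : R :=
  phi k i + rsum I (fun j => if E j i
                             then hist 0 (fun t => sig t i j) (tau k i j) - sigt k i j
                             else 0).

(* The trajectory of P-ASY-SUM-PUSH (the variables are uniquely determined
   by z 0, the data and these equations). *)
Definition is_run (I D : nat) (E : nat -> nat -> bool) (A : nat -> nat -> R)
  (act : nat -> nat) (d : nat -> nat -> nat) (eps : nat -> vec)
  (z : nat -> nat -> vec) (phi : nat -> nat -> R)
  (rho rhot : nat -> nat -> nat -> vec) (sig sigt : nat -> nat -> nat -> R)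
  (tau : nat -> nat -> nat -> Z) : Prop :=
  (forall i, (i < I)%nat -> phi 0%nat i = 1) /\
  (forall i j, E j i = true ->
     rho 0%nat i j = vzero /\ sig 0%nat i j = 0 /\
     rhot 0%nat i j = vzero /\ sigt 0%nat i j = 0) /\
  (forall k : nat,
     let ia := act k in
     (forall j, E j ia = true ->
        tau k ia j = Z.max (tau_prev D tau k ia j) (Z.of_nat k - Z.of_nat (d k j))%Z) /\
     (forall i j, E j i = true -> i <> ia -> tau k i j = tau_prev D tau k i j) /\
     z (S k) ia = (fun c => A ia ia * zhalf I E eps z rho rhot tau k ia c) /\
     phi (S k) ia = A ia ia * phihalf I E phi sig sigt tau k ia /\
     (forall j, E ia j = true ->
        rho (S k) j ia = (fun c => rho k j ia c + A j ia * zhalf I E eps z rho rhot tau k ia c) /\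
        sig (S k) j ia = sig k j ia + A j ia * phihalf I E phi sig sigt tau k ia) /\
     (forall j, E j ia = true ->
        rhot (S k) ia j = hist vzero (fun t => rho t ia j) (tau k ia j) /\
        sigt (S k) ia j = hist 0 (fun t => sig t ia j) (tau k ia j)) /\
     (forall i, (i < I)%nat -> i <> ia -> z (S k) i = z k i /\ phi (S k) i = phi k i) /\
     (forall i j, E j i = true -> j <> ia ->
        rho (S k) i j = rho k i j /\ sig (S k) i j = sig k i j) /\
     (forall i j, E j i = true -> i <> ia ->
        rhot (S k) i j = rhot k i j /\ sigt (S k) i j = sigt k i j)).

Definition mass (I : nat) (E : nat -> nat -> bool) (z : nat -> nat -> vec)
  (rho rhot : nat -> nat -> nat -> vec) (k : nat) : vec :=
  fun c => rsum I (fun i => z k i c)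
         + rsum I (fun i => rsum I (fun j =>
              if E j i then rho k i j c - rhot k i j c else 0)).

Definition stacked_norm (I n : nat) (z0 : nat -> vec) : R :=
  sqrt (rsum I (fun i => rsum n (fun c => z0 i c ^ 2))).

From Stdlib Require Import Reals ZArith Arith Lia.
From Stdlib Require Import Lra Bool Classical ClassicalEpsilon.
Open Scope R_scope.

(* Unrolling the updates, the value [Q k] that the active node forms at step [k] (a coordinate of
   [z^{k+1/2}], or [phi^{k+1/2}]) is [sum_{s<k} W k s * Q s + eps^k] plus an initial term, where the
   nonnegative weights [W] depend only on the activation and delay pattern; the total mass is
   [sum_{s<k} Wm k s * Q s], so it only changes by the perturbations.  For [phi] there is no
   perturbation and the mass is [I]: together with strong connectivity and bounded delays this keeps
   the half-values [ph] of [phi] between a positive floor and [I].  The ratios [Q / ph] then behave like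
   a consensus iteration: by a maximum principle, over each period of [I (T + D + 1) + 2 (T + D)] steps
   the spread of the ratios on a window of [2 (T + D)] steps contracts by a fixed factor [1 - delta], up
   to the perturbations, hence decays geometrically.  Finally [y_i^{k+1}] is one of these ratios and
   [m_z^{k+1} / I] is an average of recent ones. *)

Lemma rsum_ext N f g : (forall i, (i < N)%nat -> f i = g i) -> rsum N f = rsum N g.
Proof.
  induction N; simpl; intros H; [reflexivity|].
  rewrite IHN by (intros; apply H; lia). rewrite H by lia. reflexivity.
Qed.

Lemma rsum_plus N f g : rsum N (fun i => f i + g i) = rsum N f + rsum N g.
Proof. induction N; simpl; [lra|]. rewrite IHN; lra. Qed.

Lemma rsum_minus N f g : rsum N (fun i => f i - g i) = rsum N f - rsum N g.
Proof. induction N; simpl; [lra|]. rewrite IHN; lra. Qed.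

Lemma rsum_scal N c f : rsum N (fun i => c * f i) = c * rsum N f.
Proof. induction N; simpl; [lra|]. rewrite IHN; lra. Qed.

Lemma rsum_const N c : rsum N (fun _ => c) = INR N * c.
Proof. induction N; simpl; [lra|]. rewrite IHN. destruct N; simpl; lra. Qed.

Lemma rsum_zero N f : (forall i, (i < N)%nat -> f i = 0) -> rsum N f = 0.
Proof. intros H. rewrite (rsum_ext N f (fun _ => 0)), rsum_const by auto. lra. Qed.

Lemma rsum_if_const N (b : bool) f : rsum N (fun j => if b then f j else 0) = if b then rsum N f else 0.
Proof. destruct b; auto. apply rsum_zero; auto. Qed.

Lemma rsum_le N f g : (forall i, (i < N)%nat -> f i <= g i) -> rsum N f <= rsum N g.
Proof.
  induction N; simpl; intros H; [lra|].
  assert (rsum N f <= rsum N g) by (apply IHN; intros; apply H; lia).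
  specialize (H N ltac:(lia)). lra.
Qed.

Lemma rsum_nonneg N f : (forall i, (i < N)%nat -> 0 <= f i) -> 0 <= rsum N f.
Proof. intros H. rewrite <- (rsum_zero N (fun _ => 0)) by auto. apply rsum_le; auto. Qed.

Lemma rsum_abs N f : Rabs (rsum N f) <= rsum N (fun i => Rabs (f i)).
Proof. induction N; simpl. rewrite Rabs_R0; lra. eapply Rle_trans; [apply Rabs_triang | lra]. Qed.

Lemma rsum_exchange N M (f : nat -> nat -> R) :
  rsum N (fun i => rsum M (fun j => f i j)) = rsum M (fun j => rsum N (fun i => f i j)).
Proof. induction N; simpl. rewrite rsum_zero; auto. rewrite IHN, <- rsum_plus. reflexivity. Qed.

Lemma rsum_delta N a g : (a < N)%nat -> rsum N (fun j => if Nat.eqb j a then g j else 0) = g a.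
Proof.
  induction N; simpl; intros H; [lia|]. destruct (Nat.eq_dec a N).
  - subst. rewrite Nat.eqb_refl, rsum_zero; [lra|].
    intros i Hi. destruct (Nat.eqb_spec i N); [lia|auto].
  - rewrite IHN by lia. destruct (Nat.eqb_spec N a); [lia|lra].
Qed.

Lemma rsum_term_le N f i : (forall j, (j < N)%nat -> 0 <= f j) -> (i < N)%nat -> f i <= rsum N f.
Proof.
  induction N; simpl; intros H Hi; [lia|]. destruct (Nat.eq_dec i N).
  - subst. assert (0 <= rsum N f) by (apply rsum_nonneg; intros; apply H; lia). lra.
  - assert (f i <= rsum N f) by (apply IHN; [intros; apply H; lia|lia]).
    specialize (H N ltac:(lia)). lra.
Qed.

Lemma rsum_app m n g : rsum (m + n) g = rsum m g + rsum n (fun j => g (m + j)%nat).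
Proof. induction n; simpl. rewrite Nat.add_0_r; lra. rewrite Nat.add_succ_r. simpl. rewrite IHn. lra. Qed.

Lemma rsum_le_longer m n f : (m <= n)%nat -> (forall i, (i < n)%nat -> 0 <= f i) -> rsum m f <= rsum n f.
Proof.
  intros Hmn Hf. replace n with (m + (n - m))%nat by lia. rewrite rsum_app.
  assert (0 <= rsum (n - m) (fun j => f (m + j)%nat)) by (apply rsum_nonneg; intros; apply Hf; lia). lra.
Qed.

Lemma rsum_prefix N m f : (m <= N)%nat -> rsum N (fun s => if Nat.ltb s m then f s else 0) = rsum m f.
Proof.
  intros H. replace N with (m + (N - m))%nat by lia. rewrite rsum_app, (rsum_zero (N - m)).
  - rewrite Rplus_0_r. apply rsum_ext. intros i Hi. destruct (Nat.ltb_spec i m); [reflexivity|lia].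
  - intros i _. destruct (Nat.ltb_spec (m + i) m); [lia|reflexivity].
Qed.

Lemma rsum_sub_prefix N lo hi f : (lo <= hi)%nat -> (hi <= N)%nat ->
  rsum hi f - rsum lo f = rsum N (fun s => if Nat.leb lo s && Nat.ltb s hi then f s else 0).
Proof.
  intros H1 H2. rewrite <- (rsum_prefix N hi), <- (rsum_prefix N lo), <- rsum_minus by lia.
  apply rsum_ext. intros i Hi.
  destruct (Nat.ltb_spec i hi), (Nat.ltb_spec i lo), (Nat.leb_spec lo i); simpl; try lra; lia.
Qed.

Lemma rsum_le_last_terms k B c g : 0 <= c -> (forall s, (s + B < k)%nat -> g s = 0) ->
  (forall s, (s < k)%nat -> (k <= s + B)%nat -> g s <= c) -> rsum k g <= INR B * c.
Proof.
  intros Hc H0 H1. destruct (le_lt_dec B k).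
  - replace k with ((k - B) + B)%nat by lia. rewrite rsum_app, rsum_zero, <- rsum_const, Rplus_0_l.
    + apply rsum_le. intros j Hj. apply H1; lia.
    + intros s Hs. apply H0; lia.
  - apply Rle_trans with (INR k * c).
    + rewrite <- rsum_const. apply rsum_le. intros; apply H1; lia.
    + apply Rmult_le_compat_r; auto. apply le_INR; lia.
Qed.

Lemma nsum_term_le N f w : (w < N)%nat -> (f w <= nsum N f)%nat.
Proof.
  induction N; simpl; intros; [lia|].
  destruct (Nat.eq_dec w N); [subst; lia|]. specialize (IHN ltac:(lia)). lia.
Qed.

Lemma nsum_le N f g : (forall v, (v < N)%nat -> (f v <= g v)%nat) -> (nsum N f <= nsum N g)%nat.
Proof.
  induction N; simpl; intros H; [lia|].
  specialize (IHN ltac:(intros; apply H; lia)). specialize (H N ltac:(lia)). lia.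
Qed.

Lemma nsum_lt N f g w : (forall v, (v < N)%nat -> (f v <= g v)%nat) -> (w < N)%nat -> (f w < g w)%nat ->
  (nsum N f < nsum N g)%nat.
Proof.
  induction N; simpl; intros H Hw Hs; [lia|]. destruct (Nat.eq_dec w N).
  - subst. pose proof (nsum_le N f g ltac:(intros; apply H; lia)). lia.
  - specialize (IHN ltac:(intros; apply H; lia) ltac:(lia) Hs). specialize (H N ltac:(lia)). lia.
Qed.

Lemma nsum_const_1 N : nsum N (fun _ => 1%nat) = N.
Proof. induction N; simpl; lia. Qed.

Lemma nat_strong_ind (Pr : nat -> Prop) : (forall k, (forall s, (s < k)%nat -> Pr s) -> Pr k) -> forall k, Pr k.
Proof.
  intros H k. enough (forall n s, (s < n)%nat -> Pr s) by (apply (H0 (S k)); lia).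
  induction n; intros s Hs; [lia|]. apply H. intros; apply IHn; lia.
Qed.

Lemma least_true (f : nat -> bool) n : f n = true ->
  exists m, (m <= n)%nat /\ f m = true /\ forall q, (q < m)%nat -> f q = false.
Proof.
  induction n as [n IH] using nat_strong_ind. intros Hn.
  destruct (classic (exists q, (q < n)%nat /\ f q = true)) as [[q [Hq Hfq]]|Hno].
  - destruct (IH q Hq Hfq) as [m [Hm1 Hm2]]. exists m. split; [lia|auto].
  - exists n. split; [lia|split; auto]. intros q Hq. destruct (f q) eqn:Hf; auto. exfalso; eauto.
Qed.

Lemma argmax_window (f : nat -> R) a n :
  exists m, (a <= m <= a + n)%nat /\ forall s, (a <= s <= a + n)%nat -> f s <= f m.
Proof.
  induction n.
  - exists a. split; [lia|]. intros s Hs. replace s with a by lia. lra.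
  - destruct IHn as [m [H1 H2]]. destruct (Rle_dec (f (a + S n)%nat) (f m)).
    + exists m. split; [lia|]. intros s Hs.
      destruct (Nat.eq_dec s (a + S n)); [subst; auto | apply H2; lia].
    + exists (a + S n)%nat. split; [lia|]. intros s Hs.
      destruct (Nat.eq_dec s (a + S n)); [subst; lra|]. specialize (H2 s ltac:(lia)). lra.
Qed.

Lemma growing_family_full (Rm : nat -> nat -> Prop) N v0 :
  (v0 < N)%nat -> Rm 0%nat v0 -> (forall m v, Rm m v -> Rm (S m) v) ->
  (forall m, (exists v, (v < N)%nat /\ ~ Rm m v) -> exists w, (w < N)%nat /\ ~ Rm m w /\ Rm (S m) w) ->
  forall v, (v < N)%nat -> Rm N v.
Proof.
  intros Hv0 H0 Hmono Hgrow.
  set (cnt := fun m => nsum N (fun v => if excluded_middle_informative (Rm m v) then 1%nat else 0%nat)).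
  assert (Hcnt : forall m, (forall v, (v < N)%nat -> Rm m v) \/ (S m <= cnt m)%nat).
  { induction m as [|m [Hall|Hc]].
    - right. unfold cnt.
      pose proof (nsum_term_le N (fun v => if excluded_middle_informative (Rm 0%nat v) then 1%nat else 0%nat) v0 Hv0).
      simpl in H. destruct (excluded_middle_informative (Rm 0%nat v0)); [lia|contradiction].
    - left; intros; apply Hmono; auto.
    - destruct (classic (forall v, (v < N)%nat -> Rm (S m) v)) as [|Hnot]; [left; auto|right].
      destruct (Hgrow m) as [w [Hw [Hn Hy]]].
      { apply not_all_ex_not in Hnot. destruct Hnot as [v Hv]. apply imply_to_and in Hv.
        exists v. split; [tauto|]. intros Hm. apply Hv, Hmono, Hm. }
      assert (cnt m < cnt (S m))%nat.
      { apply (nsum_lt N _ _ w); auto.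
        - intros v _. destruct (excluded_middle_informative (Rm m v)),
            (excluded_middle_informative (Rm (S m) v)); try lia. exfalso; eauto.
        - destruct (excluded_middle_informative (Rm m w)),
            (excluded_middle_informative (Rm (S m) w)); try lia; tauto. }
      lia. }
  intros v Hv. destruct (Hcnt N) as [Hall|Hc]; auto. exfalso.
  assert (cnt N <= N)%nat.
  { rewrite <- (nsum_const_1 N). apply nsum_le. intros; destruct (excluded_middle_informative _); lia. }
  lia.
Qed.

Lemma Rdiv_nonneg a b : 0 <= a -> 0 < b -> 0 <= a / b.
Proof. intros. unfold Rdiv. apply Rmult_le_pos; auto. left; apply Rinv_0_lt_compat; auto. Qed.

Lemma Rdiv_le_of_le_mult (q p m : R) : 0 < p -> q <= m * p -> q / p <= m.
Proof. intros Hp H. apply Rmult_le_reg_r with p; auto. unfold Rdiv. rewrite Rmult_assoc, Rinv_l; lra. Qed.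

Lemma Rle_div_of_mult_le (q p m : R) : 0 < p -> m * p <= q -> m <= q / p.
Proof. intros Hp H. apply Rmult_le_reg_r with p; auto. unfold Rdiv. rewrite Rmult_assoc, Rinv_l; lra. Qed.

Lemma Rabs_div_pos a b : 0 < b -> Rabs (a / b) = Rabs a / b.
Proof. intros Hb. unfold Rdiv. rewrite Rabs_mult, (Rabs_right (/ b)); auto. left; apply Rinv_0_lt_compat; auto. Qed.

Lemma Rdiv_le_antimono (x a b : R) : 0 <= x -> 0 < a <= b -> x / b <= x / a.
Proof. intros Hx Hab. unfold Rdiv. apply Rmult_le_compat_l; auto. apply Rinv_le_contravar; lra. Qed.

Lemma pow_le_1 (m : R) n : 0 <= m <= 1 -> m ^ n <= 1.
Proof. intros H. induction n; simpl; [lra|]. assert (0 <= m ^ n) by (apply pow_le; lra). nra. Qed.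

Lemma pow_le_antimono (m : R) a b : 0 <= m <= 1 -> (a <= b)%nat -> m ^ b <= m ^ a.
Proof.
  intros Hm Hab. replace b with (a + (b - a))%nat by lia. rewrite pow_add.
  assert (0 <= m ^ a) by (apply pow_le; lra). assert (m ^ (b - a) <= 1) by (apply pow_le_1; lra).
  assert (0 <= m ^ (b - a)) by (apply pow_le; lra). nra.
Qed.

Lemma bernoulli a n : 0 <= a <= 1 -> 1 - INR n * a <= (1 - a) ^ n.
Proof. intros Ha. induction n; [simpl; lra|]. rewrite S_INR. simpl. pose proof (pos_INR n). nra. Qed.

Fixpoint last_act (act : nat -> nat) (k i : nat) : option nat :=
  match k with
  | O => None
  | S k' => if Nat.eqb (act k') i then Some k' else last_act act k' i
  end.

Lemma last_act_lt act k i p : last_act act k i = Some p -> (p < k)%nat /\ act p = i.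
Proof.
  induction k; simpl; [discriminate|]. destruct (Nat.eqb_spec (act k) i).
  - intros H; inversion H; subst; split; auto.
  - intros H; destruct (IHk H); split; [lia|auto].
Qed.

Lemma last_act_ge act k i s : act s = i -> (s < k)%nat ->
  exists p, last_act act k i = Some p /\ (s <= p)%nat.
Proof.
  induction k; simpl; [lia|]. intros Ha Hs. destruct (Nat.eqb_spec (act k) i).
  - exists k; split; auto; lia.
  - destruct (Nat.eq_dec s k); [subst; tauto|]. apply IHk; auto; lia.
Qed.

Lemma hist_of_zero (f : nat -> R) t : f 0%nat = 0 -> hist 0 f t = f (Z.to_nat t).
Proof. intros H; unfold hist. destruct (Z.leb_spec t 0); auto. replace (Z.to_nat t) with 0%nat by lia. auto. Qed.

(* One coordinate of [z] (or [phi]) and of the pushed/buffered masses, with [x k i] for the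
   node value, [r k i j] for the cumulative mass sent from [j] to [i] and [rt k i j] for its buffer;
   [half_val k] is the value [x_{act k}^{k+1/2}] formed at step [k]. *)
Definition half_val (I : nat) (E : nat -> nat -> bool) (act : nat -> nat) (tau : nat -> nat -> nat -> Z)
  (x : nat -> nat -> R) (r rt : nat -> nat -> nat -> R) (e : nat -> R) (k : nat) : R :=
  x k (act k) + rsum I (fun j => if E j (act k)
     then hist 0 (fun t => r t (act k) j) (tau k (act k) j) - rt k (act k) j else 0) + e k.

Section ScalarRunRecord.
Local Set Implicit Arguments.

Record scalar_run (I : nat) (E : nat -> nat -> bool) (A : nat -> nat -> R) (act : nat -> nat)
  (tau : nat -> nat -> nat -> Z) (x : nat -> nat -> R) (r rt : nat -> nat -> nat -> R) (e : nat -> R) : Prop := {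
  sr_init : forall i j, E j i = true -> r 0%nat i j = 0 /\ rt 0%nat i j = 0;
  sr_node : forall k, x (S k) (act k) = A (act k) (act k) * half_val I E act tau x r rt e k;
  sr_push : forall k j, E (act k) j = true ->
    r (S k) j (act k) = r k j (act k) + A j (act k) * half_val I E act tau x r rt e k;
  sr_buffer : forall k j, E j (act k) = true ->
    rt (S k) (act k) j = hist 0 (fun t => r t (act k) j) (tau k (act k) j);
  sr_node_idle : forall k i, (i < I)%nat -> i <> act k -> x (S k) i = x k i;
  sr_push_idle : forall k i j, E j i = true -> j <> act k -> r (S k) i j = r k i j;
  sr_buffer_idle : forall k i j, E j i = true -> i <> act k -> rt (S k) i j = rt k i j }.

End ScalarRunRecord.

Section ScalarRun.

Variables (I D : nat) (E : nat -> nat -> bool) (A : nat -> nat -> R) (act : nat -> nat)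
  (d : nat -> nat -> nat) (tau : nat -> nat -> nat -> Z).
Hypothesis Hloop : forall i, E i i = false.
Hypothesis Hact : forall k, (act k < I)%nat.
Hypothesis Htau_act : forall k j, E j (act k) = true ->
  tau k (act k) j = Z.max (tau_prev D tau k (act k) j) (Z.of_nat k - Z.of_nat (d k j))%Z.
Hypothesis Htau_idle : forall k i j, E j i = true -> i <> act k -> tau k i j = tau_prev D tau k i j.

Lemma tau_prev_le_tau k i j : E j i = true -> (tau_prev D tau k i j <= tau k i j)%Z.
Proof.
  intros He. destruct (Nat.eq_dec i (act k)).
  - subst. rewrite Htau_act by auto. lia.
  - rewrite Htau_idle by auto. lia.
Qed.

Lemma tau_le_now k i j : E j i = true -> (tau k i j <= Z.of_nat k)%Z /\ (tau_prev D tau k i j <= Z.of_nat k)%Z.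
Proof.
  intros He. induction k as [|k IH];
    [assert (Hp : (tau_prev D tau 0 i j <= 0)%Z) by (simpl; lia)
    |assert (Hp : (tau_prev D tau (S k) i j <= Z.of_nat (S k))%Z) by (simpl; lia)];
    (split; [|auto]); match goal with |- (tau ?k' _ _ <= _)%Z =>
      destruct (Nat.eq_dec i (act k')); [subst; rewrite Htau_act by auto | rewrite Htau_idle by auto]; lia end.
Qed.

Definition tau_lo k i j := Z.to_nat (tau_prev D tau k i j).
Definition tau_hi k i j := Z.to_nat (tau k i j).

Lemma tau_lo_le_hi k i j : E j i = true -> (tau_lo k i j <= tau_hi k i j <= k)%nat.
Proof. intros He. unfold tau_lo, tau_hi. pose proof (tau_prev_le_tau k i j He). destruct (tau_le_now k i j He). lia. Qed.

Variables (x : nat -> nat -> R) (r rt : nat -> nat -> nat -> R) (e : nat -> R).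
Hypothesis Hrun : scalar_run I E A act tau x r rt e.

Notation hv := (half_val I E act tau x r rt e).

Lemma val_last_act k i : (i < I)%nat ->
  x k i = match last_act act k i with Some p => A i i * hv p | None => x 0%nat i end.
Proof.
  intros Hi. induction k; simpl; auto. destruct (Nat.eqb_spec (act k) i).
  - subst. apply (sr_node Hrun).
  - rewrite (sr_node_idle Hrun); auto.
Qed.

Lemma push_cumulative t i j : E j i = true ->
  r t i j = rsum t (fun s => if Nat.eqb (act s) j then A i j * hv s else 0).
Proof.
  intros He. induction t; simpl; [apply (sr_init Hrun); auto|].
  destruct (Nat.eqb_spec (act t) j).
  - subst. rewrite (sr_push Hrun), IHt by auto. reflexivity.
  - rewrite (sr_push_idle Hrun), IHt by auto. lra.
Qed.

Lemma buffer_eq_push k i j : E j i = true -> rt k i j = r (tau_lo k i j) i j.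
Proof.
  intros He. unfold tau_lo. induction k; simpl.
  - replace (Z.to_nat (- Z.of_nat D)) with 0%nat by lia. destruct (sr_init Hrun i j He); lra.
  - destruct (Nat.eq_dec i (act k)).
    + subst. rewrite (sr_buffer Hrun) by auto. apply hist_of_zero, (sr_init Hrun); auto.
    + rewrite (sr_buffer_idle Hrun), IHk, Htau_idle by auto. reflexivity.
Qed.

Lemma push_window_weights k i (lo hi : nat -> nat) : (i < I)%nat ->
  (forall j, E j i = true -> (lo j <= hi j <= k)%nat) ->
  rsum I (fun j => if E j i then r (hi j) i j - r (lo j) i j else 0)
  = rsum k (fun s => (if E (act s) i && Nat.leb (lo (act s)) s && Nat.ltb s (hi (act s))
                      then A i (act s) else 0) * hv s).
Proof.
  intros Hi Hw.
  transitivity (rsum I (fun j => rsum k (fun s => if Nat.eqb j (act s) then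
     (if E (act s) i && Nat.leb (lo (act s)) s && Nat.ltb s (hi (act s)) then A i (act s) else 0) * hv s
     else 0))).
  - apply rsum_ext. intros j Hj. destruct (E j i) eqn:He.
    + rewrite !(push_cumulative _ i j He), (rsum_sub_prefix k) by (pose proof (Hw j He); lia).
      apply rsum_ext. intros s Hs.
      destruct (Nat.eqb_spec (act s) j), (Nat.eqb_spec j (act s)); try lia.
      * subst j. rewrite He. simpl. destruct (Nat.leb _ s && Nat.ltb s _); lra.
      * destruct (Nat.leb _ s && Nat.ltb s _); lra.
    + symmetry. apply rsum_zero. intros s Hs.
      destruct (Nat.eqb_spec j (act s)); auto. subst j. rewrite He. simpl. lra.
  - rewrite rsum_exchange. apply rsum_ext. intros s Hs. apply (rsum_delta I (act s) (fun _ => _)), Hact.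
Qed.

(* The value formed at step [k] is a weighted sum of the earlier ones: the node's own previous
   value (through [A i i]) and the masses of its in-neighbours read fresh from the pushes. *)
Definition wgt (k s : nat) : R :=
  (match last_act act k (act k) with Some p => if Nat.eqb p s then A (act k) (act k) else 0 | None => 0 end)
  + (if E (act s) (act k) && Nat.leb (tau_lo k (act k) (act s)) s && Nat.ltb s (tau_hi k (act k) (act s))
     then A (act k) (act s) else 0).

Definition init_term (k : nat) : R :=
  match last_act act k (act k) with Some _ => 0 | None => x 0%nat (act k) end.

Lemma own_weight k i : (i < I)%nat ->
  x k i = match last_act act k i with Some _ => 0 | None => x 0%nat i end
          + rsum k (fun s => (match last_act act k i with
                              Some p => if Nat.eqb p s then A i i else 0 | None => 0 end) * hv s).
Proof.
  intros Hi. rewrite val_last_act by auto. destruct (last_act act k i) as [p|] eqn:Hp.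
  - destruct (last_act_lt _ _ _ _ Hp) as [Hpk _].
    rewrite (rsum_ext k _ (fun s => if Nat.eqb s p then A i i * hv s else 0)).
    + rewrite rsum_delta by auto. lra.
    + intros s Hs. destruct (Nat.eqb_spec p s), (Nat.eqb_spec s p); try lia; lra.
  - rewrite rsum_zero; [lra|]. intros; lra.
Qed.

Lemma half_val_recursion k : hv k = init_term k + rsum k (fun s => wgt k s * hv s) + e k.
Proof.
  set (i := act k). unfold hv at 1, half_val at 1. fold i.
  rewrite (own_weight k i) by apply Hact.
  rewrite (rsum_ext I _ (fun j => if E j i then r (tau_hi k i j) i j - r (tau_lo k i j) i j else 0)).
  2:{ intros j _. destruct (E j i) eqn:He; auto.
      rewrite hist_of_zero, buffer_eq_push by (auto; apply (sr_init Hrun); auto). reflexivity. }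
  rewrite (push_window_weights k i) by (apply Hact || (intros; apply tau_lo_le_hi; auto)).
  unfold init_term, wgt. fold i. rewrite (Rplus_assoc _ (rsum k _) (rsum k _)), <- rsum_plus.
  f_equal. f_equal. apply rsum_ext. intros. unfold half_val. ring.
Qed.

Definition mass_scalar k :=
  rsum I (fun i => x k i) + rsum I (fun i => rsum I (fun j => if E j i then r k i j - rt k i j else 0)).

Definition mass_wgt (k s : nat) : R :=
  (match last_act act k (act s) with Some p => if Nat.eqb p s then A (act s) (act s) else 0 | None => 0 end)
  + rsum I (fun i => if E (act s) i && Nat.leb (tau_lo k i (act s)) s then A i (act s) else 0).

Definition mass_init (k : nat) : R :=
  rsum I (fun i => match last_act act k i with Some _ => 0 | None => x 0%nat i end).

Lemma mass_weights k : mass_scalar k = mass_init k + rsum k (fun s => mass_wgt k s * hv s).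
Proof.
  unfold mass_scalar, mass_init, mass_wgt.
  rewrite (rsum_ext I (fun i => x k i) (fun i => match last_act act k i with Some _ => 0 | None => x 0%nat i end
     + rsum k (fun s => (match last_act act k i with Some p => if Nat.eqb p s then A i i else 0 | None => 0 end)
                        * hv s))) by (intros; apply own_weight; auto).
  rewrite rsum_plus, rsum_exchange, Rplus_assoc. f_equal.
  rewrite (rsum_ext I (fun i => rsum I (fun j => if E j i then r k i j - rt k i j else 0))
    (fun i => rsum k (fun s => (if E (act s) i && Nat.leb (tau_lo k i (act s)) s then A i (act s) else 0) * hv s))).
  2:{ intros i Hi. rewrite (rsum_ext I _ (fun j => if E j i then r k i j - r (tau_lo k i j) i j else 0)).
      - pose proof (push_window_weights k i (fun j => tau_lo k i j) (fun _ => k) Hi) as Hw. cbv beta in Hw.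
        rewrite Hw by (intros j He; pose proof (tau_lo_le_hi k i j He); lia).
        apply rsum_ext. intros s Hs. destruct (Nat.ltb_spec s k); [|lia]. rewrite andb_true_r. reflexivity.
      - intros j _. destruct (E j i) eqn:He; auto. rewrite buffer_eq_push; auto. }
  rewrite (rsum_exchange I k (fun i s =>
    (if E (act s) i && Nat.leb (tau_lo k i (act s)) s then A i (act s) else 0) * hv s)), <- rsum_plus.
  apply rsum_ext. intros s Hs.
  rewrite (rsum_ext I (fun i => (if E (act s) i && _ then _ else 0) * hv s)
     (fun i => hv s * (if E (act s) i && Nat.leb (tau_lo k i (act s)) s then A i (act s) else 0))),
    rsum_scal by (intros; lra).
  rewrite (rsum_ext I (fun i => _ * hv s) (fun i => if Nat.eqb i (act s) then
     (match last_act act k (act s) with Some p => if Nat.eqb p s then A (act s) (act s) else 0 | None => 0 end)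
     * hv s else 0)).
  { rewrite (rsum_delta I (act s) (fun _ => _)) by apply Hact. lra. }
  intros i Hi. destruct (last_act act k i) as [p|] eqn:Hp.
  - destruct (Nat.eqb_spec p s).
    + subst p. destruct (last_act_lt _ _ _ _ Hp) as [_ Ha]. subst i. rewrite Nat.eqb_refl, Hp, Nat.eqb_refl. reflexivity.
    + destruct (Nat.eqb_spec i (act s)); [|lra]. subst i. rewrite Hp. destruct (Nat.eqb_spec p s); [lia|lra].
  - destruct (Nat.eqb_spec i (act s)); [|lra]. subst i. rewrite Hp. lra.
Qed.

Hypothesis Hcol : forall j, (j < I)%nat -> rsum I (fun i => A i j) = 1.
Hypothesis Hoff : forall i j, (i < I)%nat -> (j < I)%nat -> i <> j -> E j i = false -> A i j = 0.

Lemma column_sum_split j : (j < I)%nat -> A j j + rsum I (fun i => if E j i then A i j else 0) = 1.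
Proof.
  intros Hj. rewrite <- (Hcol j Hj).
  rewrite (rsum_ext I (fun i => A i j) (fun i => (if Nat.eqb i j then A j j else 0) + (if E j i then A i j else 0))).
  - rewrite rsum_plus, (rsum_delta I j (fun _ => _)) by auto. reflexivity.
  - intros i Hi. destruct (Nat.eqb_spec i j).
    + subst. rewrite Hloop. lra.
    + destruct (E j i) eqn:He; [lra|]. rewrite Hoff; auto. lra.
Qed.

Lemma node_mass_step k :
  rsum I (fun i => x (S k) i) = rsum I (fun i => x k i) + (A (act k) (act k) * hv k - x k (act k)).
Proof.
  rewrite (rsum_ext I _ (fun i => x k i + (if Nat.eqb i (act k) then A (act k) (act k) * hv k - x k (act k) else 0))).
  - rewrite rsum_plus, (rsum_delta I (act k) (fun _ => _)) by apply Hact. reflexivity.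
  - intros i Hi. destruct (Nat.eqb_spec i (act k)).
    + subst. rewrite (sr_node Hrun). lra.
    + rewrite (sr_node_idle Hrun) by auto. lra.
Qed.

(* The active node's in-edges lose their read in-flight masses, its out-edges gain their pushes. *)
Lemma edge_mass_step k : let ia := act k in
  rsum I (fun i => rsum I (fun j => if E j i then r (S k) i j - rt (S k) i j else 0))
  = rsum I (fun i => rsum I (fun j => if E j i then r k i j - rt k i j else 0))
    + hv k * rsum I (fun i => if E ia i then A i ia else 0)
    - rsum I (fun j => if E j ia then hist 0 (fun t => r t ia j) (tau k ia j) - rt k ia j else 0).
Proof.
  intros ia. set (Y := rsum I (fun j => if E j ia then hist 0 (fun t => r t ia j) (tau k ia j) - rt k ia j else 0)).
  rewrite <- rsum_scal.
  rewrite (rsum_ext I _ (fun i => rsum I (fun j => if E j i then r k i j - rt k i j else 0)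
      + hv k * (if E ia i then A i ia else 0) - (if Nat.eqb i ia then Y else 0))).
  { rewrite rsum_minus, rsum_plus, (rsum_delta I ia (fun _ => Y)) by apply Hact. reflexivity. }
  intros i Hi.
  rewrite (rsum_ext I _ (fun j => (if E j i then r k i j - rt k i j else 0)
      + (if Nat.eqb j ia then (if E j i then A i ia * hv k else 0) else 0)
      - (if Nat.eqb i ia then (if E j ia then hist 0 (fun t => r t ia j) (tau k ia j) - rt k ia j else 0)
         else 0))).
  { rewrite rsum_minus, rsum_plus, (rsum_delta I ia (fun j => if E j i then _ else 0)), rsum_if_const
      by apply Hact.
    unfold Y. destruct (Nat.eqb_spec i ia); [subst; rewrite Hloop|destruct (E ia i)]; lra. }
  intros j Hj. destruct (E j i) eqn:He.
  - destruct (Nat.eqb_spec j ia), (Nat.eqb_spec i ia).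
    + subst. rewrite Hloop in He. discriminate.
    + subst j. unfold ia in *. rewrite (sr_push Hrun), (sr_buffer_idle Hrun) by auto. lra.
    + subst i. unfold ia in *. rewrite (sr_push_idle Hrun), (sr_buffer Hrun), He by auto. lra.
    + rewrite (sr_push_idle Hrun), (sr_buffer_idle Hrun) by auto. lra.
  - destruct (Nat.eqb_spec j ia), (Nat.eqb_spec i ia); try subst; try rewrite He; lra.
Qed.

(* [half_val k] replaces the node value and the read in-flight masses, and is redistributed
   with total weight [A ia ia + sum of A i ia over out-edges = 1]. *)
Lemma mass_step k : mass_scalar (S k) = mass_scalar k + e k.
Proof.
  unfold mass_scalar. rewrite node_mass_step, edge_mass_step. cbv zeta.
  set (Y := rsum I (fun j => if E j (act k) then hist 0 (fun t => r t (act k) j) (tau k (act k) j)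
                                              - rt k (act k) j else 0)).
  assert (Hh : hv k = x k (act k) + Y + e k) by reflexivity.
  pose proof (column_sum_split (act k) (Hact k)).
  assert (A (act k) (act k) * hv k + hv k * rsum I (fun i => if E (act k) i then A i (act k) else 0) = hv k)
    by nra.
  lra.
Qed.

End ScalarRun.

Section Weights.

Variables (I T D : nat) (mbar : R) (E : nat -> nat -> bool) (A : nat -> nat -> R) (act : nat -> nat)
  (d : nat -> nat -> nat) (tau : nat -> nat -> nat -> Z).
Hypothesis Hdig : is_digraph I E.
Hypothesis Hsc : strongly_connected I E.
Hypothesis Hmb : 0 < mbar < 1.
Hypothesis Hact : forall k, (act k < I)%nat.
Hypothesis Hwin : forall k v, (v < I)%nat -> exists t, (k <= t < k + T)%nat /\ act t = v.
Hypothesis Hdel : forall k j, E j (act k) = true -> (d k j <= D)%nat.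
Hypothesis Htau_act : forall k j, E j (act k) = true ->
  tau k (act k) j = Z.max (tau_prev D tau k (act k) j) (Z.of_nat k - Z.of_nat (d k j))%Z.
Hypothesis Htau_idle : forall k i j, E j i = true -> i <> act k -> tau k i j = tau_prev D tau k i j.
Hypothesis Hcomp : compatible I E mbar A.
Hypothesis Hcs : column_stochastic I A.

Notation W := (wgt D E A act tau).
Notation Wm := (mass_wgt I D E A act tau).
Notation lo := (tau_lo D tau).
Notation hi := (tau_hi tau).

Lemma tau_prev_last_act k i j : E j i = true ->
  tau_prev D tau k i j = match last_act act k i with Some p => tau p i j | None => (- Z.of_nat D)%Z end.
Proof.
  intros He. induction k; simpl; auto.
  destruct (Nat.eqb_spec (act k) i); [subst; auto|]. rewrite Htau_idle by auto. auto.
Qed.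

Lemma tau_act_ge p j : E j (act p) = true -> (Z.of_nat p - Z.of_nat D <= tau p (act p) j)%Z.
Proof. intros He. rewrite Htau_act by auto. pose proof (Hdel p j He). lia. Qed.

Lemma last_act_recent k i : (T <= k)%nat -> (i < I)%nat ->
  exists p, last_act act k i = Some p /\ (k <= p + T)%nat.
Proof.
  intros Hk Hi. destruct (Hwin (k - T) i Hi) as [t [Ht Ha]].
  destruct (last_act_ge act k i t Ha ltac:(lia)) as [p [Hp Hp2]]. exists p; split; auto; lia.
Qed.

Lemma tau_lo_recent k i j : (T <= k)%nat -> (i < I)%nat -> E j i = true -> (k <= lo k i j + T + D)%nat.
Proof.
  intros Hk Hi He. destruct (last_act_recent k i Hk Hi) as [p [Hp Hpk]].
  unfold tau_lo. rewrite tau_prev_last_act, Hp by auto.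
  destruct (last_act_lt _ _ _ _ Hp) as [_ Ha]. subst i. pose proof (tau_act_ge p j He). lia.
Qed.

Lemma init_terms_vanish k (g : nat -> R) : (T <= k)%nat ->
  rsum I (fun i => match last_act act k i with Some _ => 0 | None => g i end) = 0.
Proof.
  intros Hk. apply rsum_zero. intros i Hi.
  destruct (last_act_recent k i Hk Hi) as [p [Hp _]]. rewrite Hp. auto.
Qed.

Lemma A_nonneg i j : (i < I)%nat -> (j < I)%nat -> 0 <= A i j.
Proof.
  intros Hi Hj. destruct Hcomp as [H1 [H2 H3]]. destruct (Nat.eq_dec i j).
  - subst. specialize (H1 j Hj); lra.
  - destruct (E j i) eqn:He; [specialize (H2 i j He); lra | rewrite H3; auto; lra].
Qed.

Lemma A_le_1 i j : (i < I)%nat -> (j < I)%nat -> A i j <= 1.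
Proof.
  intros Hi Hj. rewrite <- (Hcs j Hj).
  apply (rsum_term_le I (fun i => A i j)); auto. intros; apply A_nonneg; auto.
Qed.

Lemma wgt_nonneg k s : 0 <= W k s.
Proof.
  unfold wgt. pose proof (A_nonneg (act k) (act k) (Hact k) (Hact k)).
  pose proof (A_nonneg (act k) (act s) (Hact k) (Hact s)).
  destruct (last_act act k (act k)); [destruct (Nat.eqb _ s)|]; destruct (_ && _ && _); lra.
Qed.

Lemma wgt_last_act k p : last_act act k (act k) = Some p -> mbar <= W k p.
Proof.
  intros Hp. unfold wgt. rewrite Hp, Nat.eqb_refl. pose proof (proj1 Hcomp (act k) (Hact k)).
  pose proof (A_nonneg (act k) (act p) (Hact k) (Hact p)). destruct (_ && _ && _); lra.
Qed.

Lemma wgt_fresh k s : E (act s) (act k) = true ->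
  (lo k (act k) (act s) <= s < hi k (act k) (act s))%nat -> mbar <= W k s.
Proof.
  intros He [H2 H3]. unfold wgt. rewrite He. apply Nat.leb_le in H2. apply Nat.ltb_lt in H3.
  rewrite H2, H3. simpl. pose proof (proj1 (proj2 Hcomp) _ _ He).
  pose proof (A_nonneg (act k) (act k) (Hact k) (Hact k)).
  destruct (last_act act k (act k)); [destruct (Nat.eqb _ s)|]; lra.
Qed.

Lemma wgt_old k s : (T <= k)%nat -> (s + T + D < k)%nat -> W k s = 0.
Proof.
  intros Hk Hs. unfold wgt. destruct (last_act_recent k (act k) Hk (Hact k)) as [p [Hp Hpk]].
  rewrite Hp. destruct (Nat.eqb_spec p s); [lia|]. destruct (E (act s) (act k)) eqn:He; simpl; [|lra].
  pose proof (tau_lo_recent k (act k) (act s) Hk (Hact k) He).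
  destruct (Nat.leb_spec (lo k (act k) (act s)) s); simpl; lra || lia.
Qed.

Lemma mass_wgt_nonneg k s : 0 <= Wm k s.
Proof.
  unfold mass_wgt. pose proof (A_nonneg (act s) (act s) (Hact s) (Hact s)).
  assert (0 <= rsum I (fun i => if E (act s) i && Nat.leb (lo k i (act s)) s then A i (act s) else 0)).
  { apply rsum_nonneg. intros i Hi. destruct (_ && _); [apply A_nonneg; auto | lra]. }
  destruct (last_act act k (act s)); [destruct (Nat.eqb _ s)|]; lra.
Qed.

Lemma mass_wgt_le k s : Wm k s <= 1 + INR I.
Proof.
  unfold mass_wgt. pose proof (A_le_1 (act s) (act s) (Hact s) (Hact s)).
  assert (rsum I (fun i => if E (act s) i && Nat.leb (lo k i (act s)) s then A i (act s) else 0) <= INR I).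
  { rewrite <- (Rmult_1_r (INR I)), <- rsum_const. apply rsum_le. intros i Hi.
    destruct (_ && _); [apply A_le_1; auto | lra]. }
  destruct (last_act act k (act s)); [destruct (Nat.eqb _ s)|]; lra.
Qed.

Lemma mass_wgt_old k s : (T <= k)%nat -> (s + T + D < k)%nat -> Wm k s = 0.
Proof.
  intros Hk Hs. unfold mass_wgt. destruct (last_act_recent k (act s) Hk (Hact s)) as [p [Hp Hpk]].
  rewrite Hp. destruct (Nat.eqb_spec p s); [lia|]. rewrite rsum_zero; [lra|]. intros i Hi.
  destruct (E (act s) i) eqn:He; simpl; [|lra].
  pose proof (tau_lo_recent k i (act s) Hk Hi He).
  destruct (Nat.leb_spec (lo k i (act s)) s); simpl; lra || lia.
Qed.

(* Right after step [k], the whole of [half_val k] is still accounted for in the mass. *)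
Lemma mass_wgt_last k : Wm (S k) k = 1.
Proof.
  unfold mass_wgt. simpl. rewrite !Nat.eqb_refl.
  rewrite <- (column_sum_split I E A (proj2 Hdig) Hcs (proj2 (proj2 Hcomp)) (act k) (Hact k)).
  f_equal. apply rsum_ext. intros i Hi. destruct (E (act k) i) eqn:He; simpl; auto.
  unfold tau_lo. simpl. destruct (tau_le_now D E act d tau Htau_act Htau_idle k i (act k) He).
  destruct (Nat.leb_spec (Z.to_nat (tau k i (act k))) k); auto. lia.
Qed.

Lemma reach_exit (Rc : nat -> Prop) x y : reach E x y -> Rc x -> ~ Rc y ->
  exists u w, E u w = true /\ Rc u /\ ~ Rc w.
Proof.
  induction 1; intros H1 H2; [contradiction|].
  destruct (classic (Rc y)); [apply IHreach; auto | exists x, y; auto].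
Qed.

Definition hop := (T + D + 1)%nat.

(* Lower bounds for any [G] dominating its own weighted past, [W t s * G s <= G t], spread
   along the activations: first at a fixed node, then across an edge, then to every node. *)
Section Propagation.

Variables (G : nat -> R) (s0 : nat).
Hypothesis HG : forall t s, (s0 <= s < t)%nat -> W t s * G s <= G t.

Lemma propagate_same_node c s t : 0 <= c -> (s0 <= s <= t)%nat -> act s = act t -> c <= G s ->
  c * mbar ^ (t - s) <= G t.
Proof.
  intros Hc. revert t. induction t as [t IH] using nat_strong_ind. intros Hst Ha Hs.
  destruct (Nat.eq_dec s t); [subst; rewrite Nat.sub_diag; simpl; lra|].
  destruct (last_act_ge act t (act t) s Ha ltac:(lia)) as [p [Hp Hsp]].
  destruct (last_act_lt _ _ _ _ Hp) as [Hpt Hap].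
  assert (Hgp : c * mbar ^ (p - s) <= G p) by (apply IH; auto; lia).
  pose proof (wgt_last_act t p Hp). pose proof (HG t p ltac:(lia)).
  assert (0 <= mbar ^ (p - s)) by (apply pow_le; lra).
  assert (mbar ^ (t - s) <= mbar ^ (S (p - s))) by (apply pow_le_antimono; [lra|lia]). simpl in H2.
  assert (0 <= c * mbar ^ (p - s)) by nra. nra.
Qed.

(* The first activation [m] of [act t] that reads a push newer than [s] reads it fresh. *)
Lemma propagate_edge c s t : 0 <= c -> (s0 <= s)%nat -> E (act s) (act t) = true -> (s + 1 + D <= t)%nat ->
  c <= G s -> c * mbar ^ (t - s) <= G t.
Proof.
  intros Hc Hs0 He Hst Hcs0. set (j := act t). set (i := act s).
  set (f := fun q => Nat.eqb (act q) j && Nat.ltb s (hi q j i)).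
  assert (Hft : f t = true).
  { unfold f. rewrite Nat.eqb_refl. apply Nat.ltb_lt. unfold tau_hi.
    pose proof (tau_act_ge t i He). unfold j. lia. }
  destruct (least_true f t Hft) as [m [Hmt [Hfm Hmin]]]. unfold f in Hfm.
  apply andb_true_iff in Hfm. destruct Hfm as [Ham Hhm]. apply Nat.eqb_eq in Ham. apply Nat.ltb_lt in Hhm.
  assert (Hsm : (s < m)%nat).
  { unfold tau_hi in Hhm. destruct (tau_le_now D E act d tau Htau_act Htau_idle m j i He). lia. }
  assert (Hlo : (lo m j i <= s)%nat).
  { unfold tau_lo. rewrite tau_prev_last_act by auto. destruct (last_act act m j) as [p|] eqn:Hp; [|lia].
    destruct (last_act_lt _ _ _ _ Hp) as [Hpm Hap]. specialize (Hmin p Hpm). unfold f in Hmin.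
    rewrite Hap, Nat.eqb_refl in Hmin. apply Nat.ltb_ge in Hmin. unfold tau_hi in Hmin. lia. }
  assert (HWm : mbar <= W m s) by (apply wgt_fresh; rewrite Ham; auto).
  assert (Gm : c * mbar <= G m) by (pose proof (HG m s ltac:(lia)); nra).
  assert (c * mbar * mbar ^ (t - m) <= G t) by (apply propagate_same_node; try nra; try lia).
  assert (mbar ^ (t - s) <= mbar ^ (S (t - m))) by (apply pow_le_antimono; [lra|lia]). simpl in H0.
  assert (0 <= mbar ^ (t - m)) by (apply pow_le; lra). nra.
Qed.

Lemma propagate_all c s : 0 <= c -> (s0 <= s)%nat -> c <= G s ->
  forall t, (s + I * hop <= t)%nat -> c * mbar ^ (t - s) <= G t.
Proof.
  intros Hc Hs0 Hcs0.
  set (reached := fun m v => exists t, (s <= t <= s + m * hop)%nat /\ act t = v /\ c * mbar ^ (t - s) <= G t).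
  assert (Hall : forall v, (v < I)%nat -> reached I v).
  { apply (growing_family_full reached I (act s) (Hact s)).
    - exists s. split; [lia|split; auto]. rewrite Nat.sub_diag; simpl; lra.
    - intros m v [t [H1 H2]]. exists t. split; auto. simpl. lia.
    - intros m [v [Hv Hnv]].
      assert (Hr0 : reached m (act s)) by (exists s; split; [lia|split; auto]; rewrite Nat.sub_diag; simpl; lra).
      destruct (reach_exit (reached m) (act s) v (Hsc _ _ (Hact s) Hv) Hr0 Hnv) as [u [w [Huw [Hu Hw]]]].
      destruct Hu as [tu [Htu [Hau Hgu]]]. destruct (proj1 Hdig w u Huw) as [_ Hwl].
      destruct (Hwin (tu + 1 + D) w Hwl) as [t [Ht Haw]].
      exists w. split; auto. split; auto. exists t. split; [unfold hop in *; simpl; nia|]. split; auto.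
      assert (0 <= c * mbar ^ (tu - s)) by (apply Rmult_le_pos; auto; apply pow_le; lra).
      pose proof (propagate_edge _ tu t H ltac:(lia) ltac:(rewrite Hau, Haw; auto) ltac:(lia) Hgu).
      rewrite Rmult_assoc, <- pow_add in H0. replace (tu - s + (t - tu))%nat with (t - s)%nat in H0 by lia. auto. }
  intros t Ht. destruct (Hall (act t) (Hact t)) as [tv [Htv [Hav Hgv]]].
  assert (0 <= c * mbar ^ (tv - s)) by (apply Rmult_le_pos; auto; apply pow_le; lra).
  pose proof (propagate_same_node _ tv t H ltac:(nia) Hav Hgv).
  rewrite Rmult_assoc, <- pow_add in H0. replace (tv - s + (t - tv))%nat with (t - s)%nat in H0 by lia. auto.
Qed.

End Propagation.

(* [ph k] stands for [phi_{act k}^{k+1/2}], for which these are [half_val_recursion] and [mass_weights]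
   (the mass of [phi] being [I]). *)
Variable ph : nat -> R.
Hypothesis Hph : forall k,
  ph k = (match last_act act k (act k) with Some _ => 0 | None => 1 end) + rsum k (fun s => W k s * ph s).
Hypothesis Hph_mass : forall k,
  INR I = rsum I (fun i => match last_act act k i with Some _ => 0 | None => 1 end)
          + rsum k (fun s => Wm k s * ph s).

Lemma ph_pos k : 0 < ph k /\ mbar ^ k <= ph k.
Proof.
  induction k as [k IH] using nat_strong_ind. rewrite Hph.
  assert (Hnn : forall q, (q < k)%nat -> 0 <= W k q * ph q).
  { intros q Hq. pose proof (wgt_nonneg k q). destruct (IH q Hq). nra. }
  pose proof (rsum_nonneg k _ Hnn).
  destruct (last_act act k (act k)) as [p|] eqn:Hp.
  - destruct (last_act_lt _ _ _ _ Hp) as [Hpk _]. destruct (IH p Hpk) as [H1 H2].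
    pose proof (rsum_term_le k (fun s => W k s * ph s) p Hnn Hpk).
    pose proof (wgt_last_act k p Hp).
    assert (Hpow : mbar ^ k <= mbar ^ (S p)) by (apply pow_le_antimono; [lra|lia]). simpl in Hpow.
    assert (0 <= mbar ^ p) by (apply pow_le; lra). split; nra.
  - pose proof (pow_le_1 mbar k ltac:(lra)). split; lra.
Qed.

Lemma ph_neq_0 k : ph k <> 0.
Proof. destruct (ph_pos k); lra. Qed.

Lemma ph_dom k s : (s < k)%nat -> W k s * ph s <= ph k.
Proof.
  intros Hs. rewrite (Hph k).
  assert (W k s * ph s <= rsum k (fun s => W k s * ph s)).
  { apply (rsum_term_le k (fun s => W k s * ph s)); auto.
    intros q Hq. pose proof (wgt_nonneg k q). destruct (ph_pos q). nra. }
  destruct (last_act act k (act k)); lra.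
Qed.

Lemma ph_le_I k : ph k <= INR I.
Proof.
  rewrite (Hph_mass (S k)).
  assert (0 <= rsum I (fun i => match last_act act (S k) i with Some _ => 0 | None => 1 end)).
  { apply rsum_nonneg. intros i _. destruct (last_act act (S k) i); lra. }
  assert (Wm (S k) k * ph k <= rsum (S k) (fun s => Wm (S k) s * ph s)).
  { apply (rsum_term_le (S k) (fun s => Wm (S k) s * ph s)); auto.
    intros q Hq. pose proof (mass_wgt_nonneg (S k) q). destruct (ph_pos q). nra. }
  rewrite mass_wgt_last in H0. lra.
Qed.

Hypothesis HI1 : (1 <= I)%nat.
Hypothesis HT1 : (1 <= T)%nat.

Definition heavy_level := INR I / (2 * (1 + INR I) * INR (T + D)).

Lemma heavy_level_bounds : 0 < heavy_level <= 1.
Proof.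
  unfold heavy_level. pose proof (lt_0_INR I ltac:(lia)). pose proof (lt_0_INR (T + D) ltac:(lia)).
  assert (1 <= INR (T + D)) by (apply (le_INR 1); lia). split.
  - apply Rdiv_lt_0_compat; nra.
  - apply Rdiv_le_of_le_mult; nra.
Qed.

(* The total mass [I] lives on the last [T + D] half-values, each with weight at most [1 + I],
   so one of them is at least [heavy_level]. *)
Lemma heavy_time k : (T <= k)%nat -> exists h, (h < k)%nat /\ (k <= h + T + D)%nat /\ heavy_level <= ph h.
Proof.
  intros Hk. apply NNPP. intros Hn.
  assert (Hl : forall h, (h < k)%nat -> (k <= h + (T + D))%nat -> ph h <= heavy_level).
  { intros h H1 H2. destruct (Rle_dec (ph h) heavy_level); auto.
    exfalso; apply Hn. exists h. split; auto. split; [lia|lra]. }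
  pose proof (Hph_mass k). rewrite init_terms_vanish in H by auto.
  assert (rsum k (fun s => Wm k s * ph s) <= INR (T + D) * ((1 + INR I) * heavy_level)).
  { apply rsum_le_last_terms.
    - pose proof heavy_level_bounds. pose proof (pos_INR I). nra.
    - intros s Hs. rewrite mass_wgt_old; [lra|auto|lia].
    - intros s Hs Hks. pose proof (mass_wgt_nonneg k s). pose proof (mass_wgt_le k s).
      pose proof (Hl s Hs Hks). destruct (ph_pos s). nra. }
  unfold heavy_level in H0. pose proof (lt_0_INR I ltac:(lia)). pose proof (lt_0_INR (T + D) ltac:(lia)).
  replace (INR (T + D) * ((1 + INR I) * (INR I / (2 * (1 + INR I) * INR (T + D))))) with (INR I / 2) in H0
    by (field; lra).
  lra.
Qed.

Definition ph_floor := heavy_level * mbar ^ (T + I * hop + T + D).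

Lemma ph_floor_bounds : 0 < ph_floor <= 1.
Proof.
  unfold ph_floor. pose proof heavy_level_bounds. pose proof (pow_le_1 mbar (T + I * hop + T + D) ltac:(lra)).
  pose proof (pow_lt mbar (T + I * hop + T + D) ltac:(lra)). split; nra.
Qed.

Lemma ph_ge_floor k : ph_floor <= ph k.
Proof.
  pose proof heavy_level_bounds. unfold ph_floor. destruct (le_lt_dec (T + I * hop) k).
  - destruct (heavy_time (k - I * hop) ltac:(lia)) as [h [H1 [H2 H3]]].
    assert (heavy_level * mbar ^ (k - h) <= ph k)
      by (apply (propagate_all ph 0); try lra; try lia; intros t s Hts; apply ph_dom; lia).
    assert (mbar ^ (T + I * hop + T + D) <= mbar ^ (k - h)) by (apply pow_le_antimono; [lra|lia]). nra.
  - destruct (ph_pos k).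
    assert (mbar ^ (T + I * hop + T + D) <= mbar ^ k) by (apply pow_le_antimono; [lra|lia]).
    assert (0 <= mbar ^ (T + I * hop + T + D)) by (apply pow_le; lra). nra.
Qed.

(* [influence h t] is the part of [ph t] that descends from [ph h] alone: the weight recursion
   started at time [h].  [influence_seq v h k s], for [s < k], encodes its course-of-values recursion. *)
Fixpoint influence_seq (v : R) (h : nat) (k : nat) : nat -> R :=
  match k with
  | O => fun _ => 0
  | S k' => fun s => if Nat.ltb s k' then influence_seq v h k' s else
      if Nat.ltb k' h then 0 else if Nat.eqb k' h then v
      else rsum k' (fun q => W k' q * influence_seq v h k' q)
  end.

Lemma influence_seq_stable v h k s : (s < k)%nat -> influence_seq v h k s = influence_seq v h (S s) s.
Proof.
  induction k; intros Hs; [lia|]. simpl. destruct (Nat.ltb_spec s k); [rewrite IHk by auto; reflexivity|].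
  assert (s = k) by lia. subst. simpl. rewrite Nat.ltb_irrefl. reflexivity.
Qed.

Definition influence h t := influence_seq (ph h) h (S t) t.

Lemma influence_eq h t : influence h t =
  if Nat.ltb t h then 0 else if Nat.eqb t h then ph h else rsum t (fun q => W t q * influence h q).
Proof.
  unfold influence at 1. simpl. rewrite Nat.ltb_irrefl.
  destruct (Nat.ltb t h); auto. destruct (Nat.eqb t h); auto.
  apply rsum_ext. intros q Hq. rewrite influence_seq_stable by auto. reflexivity.
Qed.

Lemma influence_nonneg h t : 0 <= influence h t.
Proof.
  induction t as [t IH] using nat_strong_ind. rewrite influence_eq.
  destruct (Nat.ltb t h); [lra|]. destruct (Nat.eqb t h); [destruct (ph_pos h); lra|].
  apply rsum_nonneg. intros q Hq. pose proof (wgt_nonneg t q). pose proof (IH q Hq). nra.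
Qed.

Lemma influence_dom h t s : (h <= s < t)%nat -> W t s * influence h s <= influence h t.
Proof.
  intros Hs. rewrite (influence_eq h t). destruct (Nat.ltb_spec t h); [lia|]. destruct (Nat.eqb_spec t h); [lia|].
  apply (rsum_term_le t (fun q => W t q * influence h q)); [|lia].
  intros q Hq. pose proof (wgt_nonneg t q). pose proof (influence_nonneg h q). nra.
Qed.

Lemma influence_ge h : heavy_level <= ph h ->
  forall t, (h + I * hop <= t)%nat -> heavy_level * mbar ^ (t - h) <= influence h t.
Proof.
  intros Hc t Ht. pose proof heavy_level_bounds.
  apply (propagate_all (influence h) h); try lra; try lia.
  - intros; apply influence_dom; lia.
  - rewrite influence_eq, Nat.ltb_irrefl, Nat.eqb_refl; auto.
Qed.

Definition pert_term (e : nat -> R) h l := if Nat.ltb h l then Rabs (e l) / ph l else 0.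

Definition pert_sum (e : nat -> R) h t := rsum (S t) (pert_term e h).

Lemma pert_term_nonneg e h l : 0 <= pert_term e h l.
Proof.
  unfold pert_term. destruct (Nat.ltb h l); [|lra].
  destruct (ph_pos l). apply Rdiv_nonneg; [apply Rabs_pos|lra].
Qed.

Lemma pert_sum_nonneg e h t : 0 <= pert_sum e h t.
Proof. apply rsum_nonneg. intros; apply pert_term_nonneg. Qed.

Lemma pert_sum_opp e h t : pert_sum (fun l => - e l) h t = pert_sum e h t.
Proof. apply rsum_ext. intros. unfold pert_term. rewrite Rabs_Ropp. reflexivity. Qed.

(* A maximum principle for [Q t = sum_s W t s * Q s + e t]: past a time [h], the ratios [Q / ph] stay
   below the maximum [M0] over the [T + D] steps up to [h], and move below it by the share
   [influence h t / ph t] of the gap at [h], up to the accumulated perturbations. *)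
Section MaxPrinciple.

Variables (Q e : nat -> R) (h : nat) (M0 : R).
Hypothesis Hh : (T <= h)%nat.
Hypothesis HQ : forall t, (T <= t)%nat -> Q t = rsum t (fun s => W t s * Q s) + e t.
Hypothesis Hmax : forall s, (s <= h)%nat -> (h < s + (T + D))%nat -> Q s / ph s <= M0.

Definition ub_slack t := M0 * ph t - influence h t * (M0 - Q h / ph h) + ph t * pert_sum e h t - Q t.

Lemma ub_slack_start s : (s <= h)%nat -> (h < s + (T + D))%nat -> 0 <= ub_slack s.
Proof.
  intros Hs1 Hs2. unfold ub_slack. rewrite influence_eq. destruct (ph_pos s) as [Hps _].
  pose proof (pert_sum_nonneg e h s). assert (0 <= ph s * pert_sum e h s) by (apply Rmult_le_pos; lra).
  destruct (Nat.eq_dec s h).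
  - subst s. rewrite Nat.ltb_irrefl, Nat.eqb_refl.
    replace (M0 * ph h - ph h * (M0 - Q h / ph h) + ph h * pert_sum e h h - Q h) with (ph h * pert_sum e h h)
      by (field; lra). lra.
  - destruct (Nat.ltb_spec s h); [|lia]. pose proof (Hmax s Hs1 Hs2).
    assert (Q s <= M0 * ph s) by (unfold Rdiv in H1; apply Rmult_le_reg_r with (/ ph s);
      [apply Rinv_0_lt_compat; lra | rewrite Rmult_assoc, Rinv_r; lra]).
    lra.
Qed.

Lemma ub_slack_super t : (h < t)%nat -> rsum t (fun s => W t s * ub_slack s) <= ub_slack t.
Proof.
  intros Ht. assert (HtT : (T <= t)%nat) by lia.
  pose proof (Hph t) as Hpht. destruct (last_act_recent t (act t) HtT (Hact t)) as [p [Hp _]].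
  rewrite Hp, Rplus_0_l in Hpht.
  pose proof (influence_eq h t) as Hinf. destruct (Nat.ltb_spec t h); [lia|]. destruct (Nat.eqb_spec t h); [lia|].
  set (pt := rsum t (pert_term e h)).
  assert (Hpt : pert_sum e h t = pt + Rabs (e t) / ph t).
  { unfold pert_sum. simpl. unfold pert_term at 2. destruct (Nat.ltb_spec h t); [reflexivity|lia]. }
  assert (Hpert : rsum t (fun s => W t s * ph s * pert_sum e h s) <= pt * ph t).
  { rewrite Hpht, <- rsum_scal. apply rsum_le. intros s Hs.
    assert (pert_sum e h s <= pt) by (apply rsum_le_longer; [lia | intros; apply pert_term_nonneg]).
    pose proof (wgt_nonneg t s). destruct (ph_pos s). assert (0 <= W t s * ph s) by nra. nra. }
  assert (Hsum : rsum t (fun s => W t s * ub_slack s) =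
    M0 * rsum t (fun s => W t s * ph s) - (M0 - Q h / ph h) * rsum t (fun s => W t s * influence h s)
    + rsum t (fun s => W t s * ph s * pert_sum e h s) - rsum t (fun s => W t s * Q s)).
  { rewrite <- !rsum_scal, <- rsum_minus, <- rsum_plus, <- rsum_minus.
    apply rsum_ext. intros; unfold ub_slack; ring. }
  destruct (ph_pos t) as [Hpt0 _].
  assert (Het : ph t * (Rabs (e t) / ph t) = Rabs (e t)) by (field; lra).
  pose proof (Rle_abs (e t)).
  unfold ub_slack at 2. rewrite Hpt, Hinf, (HQ t HtT), Rmult_plus_distr_l, Het, Hsum, <- Hpht. lra.
Qed.

Lemma ub_slack_nonneg t : (h < t)%nat -> 0 <= ub_slack t.
Proof.
  induction t as [t IH] using nat_strong_ind. intros Ht.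
  eapply Rle_trans; [|apply ub_slack_super; auto]. apply rsum_nonneg. intros s Hs.
  pose proof (wgt_nonneg t s). destruct (le_lt_dec s h).
  - destruct (le_lt_dec t (s + T + D)).
    + apply Rmult_le_pos; [auto|apply ub_slack_start; lia].
    + rewrite wgt_old by lia. lra.
  - apply Rmult_le_pos; [auto|apply IH; auto].
Qed.

Lemma ratio_upper t : (h < t)%nat ->
  Q t / ph t <= M0 - influence h t / ph t * (M0 - Q h / ph h) + pert_sum e h t.
Proof.
  intros Ht. pose proof (ub_slack_nonneg t Ht). unfold ub_slack in H. destruct (ph_pos t).
  apply Rdiv_le_of_le_mult; auto.
  replace ((M0 - influence h t / ph t * (M0 - Q h / ph h) + pert_sum e h t) * ph t)
    with (M0 * ph t - influence h t * (M0 - Q h / ph h) + ph t * pert_sum e h t) by (field; split; apply ph_neq_0).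
  lra.
Qed.

End MaxPrinciple.

Lemma ratio_lower Q e h m0 : (T <= h)%nat ->
  (forall t, (T <= t)%nat -> Q t = rsum t (fun s => W t s * Q s) + e t) ->
  (forall s, (s <= h)%nat -> (h < s + (T + D))%nat -> m0 <= Q s / ph s) ->
  forall t, (h < t)%nat -> m0 + influence h t / ph t * (Q h / ph h - m0) - pert_sum e h t <= Q t / ph t.
Proof.
  intros Hh HQ Hmin t Ht.
  assert (HQn : forall t, (T <= t)%nat -> - Q t = rsum t (fun s => W t s * - Q s) + - e t).
  { intros q Hq. rewrite (HQ q Hq), (rsum_ext q (fun s => W q s * - Q s) (fun s => -1 * (W q s * Q s))),
      rsum_scal by (intros; ring). ring. }
  assert (Hmax : forall s, (s <= h)%nat -> (h < s + (T + D))%nat -> - Q s / ph s <= - m0).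
  { intros s H1 H2. pose proof (Hmin s H1 H2). unfold Rdiv in *. lra. }
  pose proof (ratio_upper (fun l => - Q l) (fun l => - e l) h (- m0) Hh HQn Hmax t Ht).
  rewrite pert_sum_opp in H. unfold Rdiv in *. lra.
Qed.

Definition window := (T + D)%nat.
Definition period := (I * hop + 2 * window)%nat.
Definition delta := heavy_level * mbar ^ (period + window) / INR I.

Lemma delta_bounds : 0 < delta <= 1.
Proof.
  unfold delta. pose proof heavy_level_bounds. pose proof (pow_le_1 mbar (period + window) ltac:(lra)).
  pose proof (pow_lt mbar (period + window) ltac:(lra)). pose proof (lt_0_INR I ltac:(lia)).
  assert (1 <= INR I) by (apply (le_INR 1); lia).
  split; [apply Rdiv_lt_0_compat | apply Rdiv_le_of_le_mult]; nra.
Qed.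

Definition late_pert (e : nat -> R) k0 n := rsum n (fun l => if Nat.ltb k0 (l + window) then Rabs (e l) / ph_floor else 0).

Lemma late_pert_term_nonneg e k0 l : 0 <= (if Nat.ltb k0 (l + window) then Rabs (e l) / ph_floor else 0).
Proof. destruct (Nat.ltb k0 _); [apply Rdiv_nonneg; [apply Rabs_pos | apply ph_floor_bounds] | lra]. Qed.

Lemma pert_sum_le_late e h k0 u : (k0 < h + window)%nat -> (u <= k0 + period)%nat ->
  pert_sum e h u <= late_pert e k0 (S (k0 + period)).
Proof.
  intros Hh Hu. apply Rle_trans with (late_pert e k0 (S u)).
  - apply rsum_le. intros l Hl. unfold pert_term. destruct (Nat.ltb_spec h l).
    + destruct (Nat.ltb_spec k0 (l + window)); [|lia].
      apply Rdiv_le_antimono; [apply Rabs_pos | split; [apply ph_floor_bounds | apply ph_ge_floor]].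
    + apply late_pert_term_nonneg.
  - apply rsum_le_longer; [lia | intros; apply late_pert_term_nonneg].
Qed.

Lemma influence_share_ge h u : heavy_level <= ph h -> (h + I * hop <= u <= h + period + window)%nat ->
  delta <= influence h u / ph u.
Proof.
  intros Hh Hu. pose proof (influence_ge h Hh u ltac:(lia)). destruct (ph_pos u). pose proof (ph_le_I u).
  assert (mbar ^ (period + window) <= mbar ^ (u - h)) by (apply pow_le_antimono; [lra|lia]).
  pose proof heavy_level_bounds. pose proof (lt_0_INR I ltac:(lia)).
  assert (heavy_level * mbar ^ (period + window) <= influence h u) by nra.
  unfold delta. apply Rle_trans with (influence h u / INR I).
  - unfold Rdiv. apply Rmult_le_compat_r; [left; apply Rinv_0_lt_compat|]; lra.
  - apply Rdiv_le_antimono; [apply influence_nonneg | lra].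
Qed.

(* Over one [period] the spread of the ratios [Q / ph] on a window contracts by [1 - delta]:
   a heavy time [h] just after [k0] pulls every later ratio towards [Q h / ph h] with weight
   at least [delta], from above for the maximum and from below for the minimum. *)
Lemma spread_contraction (Q e : nat -> R) k0 X :
  (forall t, (T <= t)%nat -> Q t = rsum t (fun s => W t s * Q s) + e t) ->
  (T + window <= k0)%nat ->
  (forall s s', (s <= k0 < s + 2 * window)%nat -> (s' <= k0 < s' + 2 * window)%nat ->
     Q s / ph s - Q s' / ph s' <= X) ->
  forall t t', (t <= k0 + period < t + 2 * window)%nat -> (t' <= k0 + period < t' + 2 * window)%nat ->
  Q t / ph t - Q t' / ph t' <= (1 - delta) * X + 2 * late_pert e k0 (S (k0 + period)).
Proof.
  intros HQ Hk0 HX t t' Ht Ht'.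
  assert (Hw : window = (T + D)%nat) by reflexivity.
  assert (Hp : period = (I * hop + 2 * window)%nat) by reflexivity.
  destruct (heavy_time (S k0) ltac:(lia)) as [h [Hh1 [Hh2 Hheavy]]].
  set (a0 := (h + 1 - (T + D))%nat).
  destruct (argmax_window (fun s => Q s / ph s) a0 (h - a0)) as [sM [HM1 HM2]].
  destruct (argmax_window (fun s => - (Q s / ph s)) a0 (h - a0)) as [sm [Hm1 Hm2]].
  set (M0 := Q sM / ph sM). set (m0 := Q sm / ph sm). simpl in HM2, Hm2.
  assert (Hwin' : forall s, (s <= h)%nat -> (h < s + (T + D))%nat -> m0 <= Q s / ph s <= M0).
  { intros s H1 H2. specialize (Hm2 s ltac:(unfold a0; lia)). specialize (HM2 s ltac:(unfold a0; lia)).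
    unfold m0, M0. lra. }
  assert (HMm : M0 - m0 <= X) by (apply HX; unfold a0 in *; lia).
  assert (HhT : (T <= h)%nat) by lia.
  pose proof (ratio_upper Q e h M0 HhT HQ (fun s H1 H2 => proj2 (Hwin' s H1 H2)) t ltac:(lia)).
  pose proof (ratio_lower Q e h m0 HhT HQ (fun s H1 H2 => proj1 (Hwin' s H1 H2)) t' ltac:(lia)).
  pose proof (pert_sum_le_late e h k0 t ltac:(lia) ltac:(lia)).
  pose proof (pert_sum_le_late e h k0 t' ltac:(lia) ltac:(lia)).
  pose proof (influence_share_ge h t Hheavy ltac:(lia)).
  pose proof (influence_share_ge h t' Hheavy ltac:(lia)).
  assert (HVh : m0 <= Q h / ph h <= M0) by (apply Hwin'; lia).
  pose proof delta_bounds. nra.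
Qed.

Lemma crude_bound (Q e z0 : nat -> R) X0 :
  (forall k, Q k = (match last_act act k (act k) with Some _ => 0 | None => z0 (act k) end)
                   + rsum k (fun s => W k s * Q s) + e k) ->
  (forall i, (i < I)%nat -> Rabs (z0 i) <= X0) ->
  forall t, Rabs (Q t) <= ph t * (X0 + rsum (S t) (fun l => Rabs (e l) / ph_floor)).
Proof.
  intros HQ HX. assert (HX0 : 0 <= X0) by (pose proof (HX 0%nat ltac:(lia)); pose proof (Rabs_pos (z0 0%nat)); lra).
  pose proof ph_floor_bounds.
  assert (Hterm : forall l, 0 <= Rabs (e l) / ph_floor) by (intros; apply Rdiv_nonneg; [apply Rabs_pos|lra]).
  induction t as [t IH] using nat_strong_ind. set (St := rsum t (fun l => Rabs (e l) / ph_floor)).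
  assert (HSt : 0 <= St) by (apply rsum_nonneg; auto).
  assert (Hsum : Rabs (rsum t (fun s => W t s * Q s)) <= (X0 + St) * rsum t (fun s => W t s * ph s)).
  { eapply Rle_trans; [apply rsum_abs|]. rewrite <- rsum_scal. apply rsum_le. intros s Hs.
    rewrite Rabs_mult, (Rabs_right (W t s)) by (apply Rle_ge, wgt_nonneg).
    assert (rsum (S s) (fun l => Rabs (e l) / ph_floor) <= St) by (apply rsum_le_longer; auto; lia).
    pose proof (IH s Hs). pose proof (wgt_nonneg t s). destruct (ph_pos s).
    apply Rle_trans with (W t s * (ph s * (X0 + rsum (S s) (fun l => Rabs (e l) / ph_floor)))).
    - apply Rmult_le_compat_l; auto.
    - assert (0 <= W t s * ph s) by nra. nra. }
  pose proof (HQ t) as HQt. pose proof (Hph t) as Hpht. destruct (ph_pos t) as [Hpt0 _].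
  assert (He : Rabs (e t) <= ph t * (Rabs (e t) / ph_floor)).
  { pose proof (ph_ge_floor t). unfold Rdiv. rewrite <- Rmult_assoc.
    apply Rmult_le_reg_r with ph_floor; [lra|]. rewrite Rmult_assoc, Rinv_l by lra.
    pose proof (Rabs_pos (e t)). nra. }
  change (rsum (S t) (fun l => Rabs (e l) / ph_floor)) with (St + Rabs (e t) / ph_floor).
  pose proof (Rabs_triang (rsum t (fun s => W t s * Q s)) (e t)).
  destruct (last_act act t (act t)).
  - rewrite Rplus_0_l in HQt, Hpht. rewrite HQt. rewrite Hpht in He |- *. nra.
  - pose proof (Rabs_triang (z0 (act t)) (rsum t (fun s => W t s * Q s))). pose proof (HX (act t) (Hact t)).
    pose proof (Rabs_triang (z0 (act t) + rsum t (fun s => W t s * Q s)) (e t)).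
    rewrite HQt. rewrite Hpht in He |- *. nra.
Qed.

Lemma period_pos : (1 <= period)%nat.
Proof. unfold period, window. lia. Qed.

Definition rate := 1 - delta / (2 * INR period).
Definition start := (T + window)%nat.
Definition C_init := 2 / (ph_floor * rate ^ (start + period)).
Definition C_pert := 4 / (ph_floor * delta * rate ^ (period + window)).
Definition C_dev := C_init + C_pert.
Definition decay_bound (X0 : R) (e : nat -> R) k := rate ^ k * X0 + rsum (S k) (fun l => rate ^ (k - l) * Rabs (e l)).

Lemma rate_bounds : 0 < rate < 1 /\ 1 - delta / 2 <= rate ^ period.
Proof.
  pose proof delta_bounds. pose proof (lt_0_INR period period_pos).
  assert (1 <= INR period) by (apply (le_INR 1), period_pos).
  assert (0 < delta / (2 * INR period)) by (apply Rdiv_lt_0_compat; lra).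
  assert (delta / (2 * INR period) <= 1 / 2) by (apply Rdiv_le_of_le_mult; nra).
  unfold rate. split; [lra|]. pose proof (bernoulli (delta / (2 * INR period)) period ltac:(lra)).
  replace (INR period * (delta / (2 * INR period))) with (delta / 2) in H4 by (field; lra). lra.
Qed.

Lemma C_pos : 0 < C_init /\ 0 < C_pert.
Proof.
  destruct rate_bounds as [[H1 H2] _]. pose proof ph_floor_bounds. pose proof delta_bounds.
  pose proof (pow_lt rate (start + period) H1). pose proof (pow_lt rate (period + window) H1).
  unfold C_init, C_pert. split; apply Rdiv_lt_0_compat; try lra; apply Rmult_lt_0_compat; try lra.
  apply Rmult_lt_0_compat; lra.
Qed.

Lemma C_dev_nonneg : 0 <= C_dev.
Proof. pose proof C_pos. unfold C_dev. lra. Qed.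

Lemma decay_bound_nonneg X0 e k : 0 <= X0 -> 0 <= decay_bound X0 e k.
Proof.
  intros HX. destruct rate_bounds as [[H1 H2] _]. unfold decay_bound.
  assert (0 <= rate ^ k) by (apply pow_le; lra).
  assert (0 <= rsum (S k) (fun l => rate ^ (k - l) * Rabs (e l))).
  { apply rsum_nonneg. intros. apply Rmult_le_pos; [apply pow_le; lra | apply Rabs_pos]. }
  nra.
Qed.

Lemma decay_bound_shift X0 e k0 : 0 <= X0 -> rate ^ period * decay_bound X0 e k0 <= decay_bound X0 e (k0 + period).
Proof.
  intros HX. destruct rate_bounds as [[H1 H2] _]. unfold decay_bound.
  rewrite Rmult_plus_distr_l, <- Rmult_assoc, <- pow_add, <- rsum_scal, Nat.add_comm.
  apply Rplus_le_compat_l. apply Rle_trans with (rsum (S k0) (fun l => rate ^ (k0 + period - l) * Rabs (e l))).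
  - apply rsum_le. intros l Hl. rewrite <- Rmult_assoc, <- pow_add.
    replace (period + (k0 - l))%nat with (k0 + period - l)%nat by lia. lra.
  - rewrite Nat.add_comm. apply rsum_le_longer; [lia|].
    intros. apply Rmult_le_pos; [apply pow_le; lra | apply Rabs_pos].
Qed.

Lemma late_pert_le_decay X0 e k : 0 <= X0 -> (period <= k)%nat ->
  late_pert e (k - period) (S k) <= 1 / (ph_floor * rate ^ (period + window)) * decay_bound X0 e k.
Proof.
  intros HX Hk. destruct rate_bounds as [[Hr1 Hr2] _]. pose proof ph_floor_bounds.
  pose proof (pow_lt rate (period + window) Hr1).
  assert (Hc : 0 < 1 / (ph_floor * rate ^ (period + window))) by (apply Rdiv_lt_0_compat; [lra | nra]).
  unfold decay_bound. rewrite Rmult_plus_distr_l.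
  assert (0 <= rate ^ k * X0) by (apply Rmult_le_pos; [apply pow_le|]; lra).
  enough (late_pert e (k - period) (S k)
          <= 1 / (ph_floor * rate ^ (period + window)) * rsum (S k) (fun l => rate ^ (k - l) * Rabs (e l)))
    by nra.
  rewrite <- rsum_scal. apply rsum_le. intros l Hl. pose proof (Rabs_pos (e l)).
  assert (0 <= rate ^ (k - l)) by (apply pow_le; lra).
  destruct (Nat.ltb_spec (k - period) (l + window)); [|apply Rmult_le_pos; [lra | apply Rmult_le_pos; lra]].
  assert (rate ^ (period + window) <= rate ^ (k - l)) by (apply pow_le_antimono; [lra|lia]).
  replace (1 / (ph_floor * rate ^ (period + window)) * (rate ^ (k - l) * Rabs (e l)))
    with ((Rabs (e l) / ph_floor) * (rate ^ (k - l) / rate ^ (period + window))) by (field; lra).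
  assert (1 <= rate ^ (k - l) / rate ^ (period + window)) by (apply Rle_div_of_mult_le; lra).
  assert (0 <= Rabs (e l) / ph_floor) by (apply Rdiv_nonneg; lra). nra.
Qed.

Section Spread.

Variables (Q e z0 : nat -> R) (X0 : R).
Hypothesis HQ : forall k, Q k = (match last_act act k (act k) with Some _ => 0 | None => z0 (act k) end)
                                + rsum k (fun s => W k s * Q s) + e k.
Hypothesis HX : forall i, (i < I)%nat -> Rabs (z0 i) <= X0.

Lemma X0_nonneg : 0 <= X0.
Proof. pose proof (HX 0%nat ltac:(lia)). pose proof (Rabs_pos (z0 0%nat)). lra. Qed.

Definition spread_le (k : nat) (b : R) := forall s s', (s <= k < s + 2 * window)%nat ->
  (s' <= k < s' + 2 * window)%nat -> Q s / ph s - Q s' / ph s' <= b.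

Lemma spread_initial k : (k < start + period)%nat -> spread_le k (C_dev * decay_bound X0 e k).
Proof.
  intros Hk s s' Hs Hs'. destruct rate_bounds as [[Hr1 Hr2] _]. pose proof ph_floor_bounds. pose proof C_pos.
  pose proof X0_nonneg as HX0.
  set (Sk := rsum (S k) (fun l => Rabs (e l) / ph_floor)).
  assert (HV : forall q, (q <= k)%nat -> Rabs (Q q / ph q) <= X0 + Sk).
  { intros q Hq. destruct (ph_pos q). rewrite Rabs_div_pos by lra. apply Rdiv_le_of_le_mult; auto.
    assert (rsum (S q) (fun l => Rabs (e l) / ph_floor) <= Sk).
    { apply rsum_le_longer; [lia|]. intros; apply Rdiv_nonneg; [apply Rabs_pos|lra]. }
    pose proof (crude_bound Q e z0 X0 HQ HX q). nra. }
  assert (Hm : forall m, (m <= start + period)%nat -> 2 / ph_floor <= C_init * rate ^ m).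
  { intros m Hm. unfold C_init. pose proof (pow_lt rate (start + period) Hr1).
    assert (rate ^ (start + period) <= rate ^ m) by (apply pow_le_antimono; [lra|lia]).
    replace (2 / (ph_floor * rate ^ (start + period)) * rate ^ m)
      with ((2 / ph_floor) * (rate ^ m / rate ^ (start + period))) by (field; lra).
    assert (1 <= rate ^ m / rate ^ (start + period)) by (apply Rle_div_of_mult_le; lra).
    assert (0 <= 2 / ph_floor) by (apply Rdiv_nonneg; lra). nra. }
  assert (Hb : 2 * X0 + 2 * Sk <= C_init * decay_bound X0 e k).
  { unfold decay_bound, Sk. rewrite Rmult_plus_distr_l, <- (rsum_scal (S k) C_init), <- (rsum_scal (S k) 2).
    assert (2 * X0 <= C_init * (rate ^ k * X0)).
    { pose proof (Hm k ltac:(lia)). assert (2 <= 2 / ph_floor) by (apply Rle_div_of_mult_le; lra). nra. }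
    enough (rsum (S k) (fun i => 2 * (Rabs (e i) / ph_floor))
            <= rsum (S k) (fun i => C_init * (rate ^ (k - i) * Rabs (e i)))) by lra.
    apply rsum_le. intros l Hl. pose proof (Hm (k - l)%nat ltac:(lia)). pose proof (Rabs_pos (e l)).
    replace (2 * (Rabs (e l) / ph_floor)) with (2 / ph_floor * Rabs (e l)) by (field; lra). nra. }
  pose proof (HV s ltac:(lia)). pose proof (HV s' ltac:(lia)).
  pose proof (Rle_abs (Q s / ph s)). pose proof (Rle_abs (- (Q s' / ph s'))). rewrite Rabs_Ropp in H4.
  pose proof (decay_bound_nonneg X0 e k HX0). unfold C_dev. nra.
Qed.

Lemma spread_step k0 : (start <= k0)%nat -> spread_le k0 (C_dev * decay_bound X0 e k0) ->
  spread_le (k0 + period) (C_dev * decay_bound X0 e (k0 + period)).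
Proof.
  intros Hk0 Hsp s s' Hs Hs'. destruct rate_bounds as [[Hr1 Hr2] Hrp].
  pose proof ph_floor_bounds. pose proof delta_bounds. pose proof C_pos. pose proof X0_nonneg as HX0.
  assert (HQ' : forall t, (T <= t)%nat -> Q t = rsum t (fun s => W t s * Q s) + e t).
  { intros t Ht. rewrite HQ. destruct (last_act_recent t (act t) Ht (Hact t)) as [p [Hp _]]. rewrite Hp. lra. }
  pose proof (spread_contraction Q e k0 _ HQ' Hk0 Hsp s s' Hs Hs') as Hc.
  set (k := (k0 + period)%nat) in *.
  pose proof (late_pert_le_decay X0 e k HX0 ltac:(unfold k; lia)) as Hlate.
  replace (k - period)%nat with k0 in Hlate by (unfold k; lia).
  pose proof (decay_bound_shift X0 e k0 HX0) as Hshift. fold k in Hshift.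
  pose proof (decay_bound_nonneg X0 e k0 HX0). pose proof (decay_bound_nonneg X0 e k HX0).
  assert (Hc1 : (1 - delta) * (C_dev * decay_bound X0 e k0) <= (1 - delta / 2) * C_dev * decay_bound X0 e k).
  { assert (1 - delta <= (1 - delta / 2) * rate ^ period) by nra.
    assert (0 <= C_dev * decay_bound X0 e k0) by (unfold C_dev; nra).
    apply Rle_trans with ((1 - delta / 2) * C_dev * (rate ^ period * decay_bound X0 e k0)); [nra|].
    apply Rmult_le_compat_l; [unfold C_dev; nra | lra]. }
  assert (Hc2 : 2 * late_pert e k0 (S k) <= delta / 2 * C_dev * decay_bound X0 e k).
  { apply Rle_trans with (delta / 2 * C_pert * decay_bound X0 e k).
    - unfold C_pert.
      replace (delta / 2 * (4 / (ph_floor * delta * rate ^ (period + window))) * decay_bound X0 e k)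
        with (2 * (1 / (ph_floor * rate ^ (period + window)) * decay_bound X0 e k))
        by (field; repeat split; try lra; apply Rgt_not_eq, pow_lt; lra).
      lra.
    - apply Rmult_le_compat_r; [auto|]. unfold C_dev. nra. }
  lra.
Qed.

Lemma spread_bound k : spread_le k (C_dev * decay_bound X0 e k).
Proof.
  induction k as [k IH] using nat_strong_ind. destruct (le_lt_dec (start + period) k) as [Hk|Hk].
  - replace k with ((k - period) + period)%nat by lia.
    apply spread_step; [lia|]. apply IH. pose proof period_pos. lia.
  - apply spread_initial; auto.
Qed.

(* [mz k] is the mass of the coordinate: an average of the recent ratios with weights
   [Wm * ph], which sum to [I]. *)
Lemma deviation_bound (mz : nat -> R) :
  (forall k, mz k = rsum I (fun i => match last_act act k i with Some _ => 0 | None => z0 i end)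
                    + rsum k (fun s => Wm k s * Q s)) ->
  forall k p, (T <= S k)%nat -> (p <= k < p + T)%nat ->
  Rabs (Q p / ph p - mz (S k) / INR I) <= C_dev * decay_bound X0 e k.
Proof.
  intros Hm k p Hk Hp. pose proof (lt_0_INR I ltac:(lia)). pose proof X0_nonneg as HX0.
  set (b := C_dev * decay_bound X0 e k).
  assert (Hb : 0 <= b) by (apply Rmult_le_pos; [apply C_dev_nonneg | apply decay_bound_nonneg; auto]).
  set (V := fun s => Q s / ph s).
  assert (HmI : INR I = rsum (S k) (fun s => Wm (S k) s * ph s))
    by (rewrite (Hph_mass (S k)), init_terms_vanish by auto; lra).
  assert (Hdiff : INR I * V p - mz (S k) = rsum (S k) (fun s => Wm (S k) s * ph s * (V p - V s))).
  { rewrite Hm, init_terms_vanish, Rplus_0_l, HmI, Rmult_comm, <- rsum_scal, <- rsum_minus by auto.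
    apply rsum_ext. intros s _. unfold V. field. split; apply ph_neq_0. }
  assert (Hclose : forall s, (s < S k)%nat ->
            Rabs (Wm (S k) s * ph s * (V p - V s)) <= b * (Wm (S k) s * ph s)).
  { intros s Hs. pose proof (mass_wgt_nonneg (S k) s). destruct (ph_pos s).
    destruct (le_lt_dec (S k) (s + T + D)).
    - rewrite Rabs_mult, (Rabs_right (Wm (S k) s * ph s)) by nra.
      assert (Rabs (V p - V s) <= b).
      { apply Rabs_le. unfold V, window. split.
        - enough (Q s / ph s - Q p / ph p <= b) by lra. apply spread_bound; unfold window; lia.
        - apply spread_bound; unfold window; lia. }
      rewrite (Rmult_comm b). apply Rmult_le_compat_l; [nra | auto].
    - rewrite mass_wgt_old, !Rmult_0_l, Rabs_R0 by lia. lra. }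
  replace (Q p / ph p - mz (S k) / INR I) with ((INR I * V p - mz (S k)) / INR I)
    by (unfold V; field; split; [lra | apply ph_neq_0]).
  rewrite Rabs_div_pos by lra. apply Rdiv_le_of_le_mult; auto.
  rewrite Hdiff, HmI, <- rsum_scal. eapply Rle_trans; [apply rsum_abs | apply rsum_le; auto].
Qed.

End Spread.

End Weights.

Lemma rsum_cauchy_schwarz n (f g : nat -> R) :
  (rsum n (fun c => f c * g c)) ^ 2 <= rsum n (fun c => f c ^ 2) * rsum n (fun c => g c ^ 2).
Proof.
  assert (H : 0 <= rsum n (fun i => rsum n (fun j => (f i * g j - f j * g i) ^ 2))).
  { apply rsum_nonneg; intros; apply rsum_nonneg; intros. apply pow2_ge_0. }
  rewrite (rsum_ext n _ (fun i => rsum n (fun j => g j ^ 2) * f i ^ 2 + rsum n (fun j => f j ^ 2) * g i ^ 2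
     - (2 * rsum n (fun j => f j * g j)) * (f i * g i))) in H.
  2:{ intros i Hi.
      transitivity (rsum n (fun j => f i ^ 2 * g j ^ 2 + g i ^ 2 * f j ^ 2 - 2 * (f i * g i) * (f j * g j))).
      - apply rsum_ext. intros; ring.
      - rewrite rsum_minus, rsum_plus, !rsum_scal. ring. }
  rewrite rsum_minus, rsum_plus, !rsum_scal in H. nra.
Qed.

Lemma vnorm_nonneg n v : 0 <= vnorm n v.
Proof. apply sqrt_pos. Qed.

Lemma vnorm_sq n v : vnorm n v ^ 2 = rsum n (fun c => v c ^ 2).
Proof. unfold vnorm. rewrite <- Rsqr_pow2. apply Rsqr_sqrt. apply rsum_nonneg; intros; apply pow2_ge_0. Qed.

Lemma sqrt_le_of_le_sq a b : 0 <= a -> 0 <= b -> a <= b ^ 2 -> sqrt a <= b.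
Proof. intros Ha Hb H. rewrite <- (sqrt_pow2 b Hb). apply sqrt_le_1; auto. apply pow2_ge_0. Qed.

Lemma vnorm_triang n (f g : vec) : vnorm n (fun c => f c + g c) <= vnorm n f + vnorm n g.
Proof.
  pose proof (vnorm_nonneg n f). pose proof (vnorm_nonneg n g).
  unfold vnorm at 1. apply sqrt_le_of_le_sq; [apply rsum_nonneg; intros; apply pow2_ge_0 | lra |].
  pose proof (rsum_cauchy_schwarz n f g) as Hcs. rewrite <- !vnorm_sq in Hcs.
  rewrite (rsum_ext n _ (fun c => f c ^ 2 + g c ^ 2 + 2 * (f c * g c))), !rsum_plus, rsum_scal, <- !vnorm_sq
    by (intros; ring).
  set (S := rsum n (fun c => f c * g c)) in *.
  assert (S <= vnorm n f * vnorm n g).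
  { destruct (Rle_dec S 0); [nra|]. rewrite <- Rpow_mult_distr in Hcs.
    apply Rsqr_incr_0_var; [rewrite !Rsqr_pow2; auto | nra]. }
  nra.
Qed.

Lemma vnorm_mono n (u w : vec) : (forall c, (c < n)%nat -> Rabs (u c) <= w c) -> vnorm n u <= vnorm n w.
Proof.
  intros H. apply sqrt_le_1; try (apply rsum_nonneg; intros; apply pow2_ge_0).
  apply rsum_le. intros c Hc. specialize (H c Hc). pose proof (Rabs_pos (u c)).
  rewrite <- (pow2_abs (u c)). nra.
Qed.

Lemma vnorm_scal n a (u : vec) : 0 <= a -> vnorm n (fun c => a * u c) = a * vnorm n u.
Proof.
  intros Ha. unfold vnorm. rewrite (rsum_ext n _ (fun c => a ^ 2 * u c ^ 2)), rsum_scal by (intros; ring).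
  rewrite sqrt_mult, sqrt_pow2; auto. apply pow2_ge_0. apply rsum_nonneg; intros; apply pow2_ge_0.
Qed.

Lemma vnorm_abs n (u : vec) : vnorm n (fun c => Rabs (u c)) = vnorm n u.
Proof. unfold vnorm. f_equal. apply rsum_ext. intros. apply pow2_abs. Qed.

Lemma vnorm_rsum n M (b : nat -> R) (ws : nat -> vec) : (forall l, 0 <= b l) ->
  vnorm n (fun c => rsum M (fun l => b l * Rabs (ws l c))) <= rsum M (fun l => b l * vnorm n (ws l)).
Proof.
  intros Hb. induction M; simpl.
  - unfold vnorm. rewrite rsum_zero, sqrt_0; [lra|]. intros; simpl; ring.
  - eapply Rle_trans; [apply (vnorm_triang n (fun c => rsum M (fun l => b l * Rabs (ws l c)))
                                            (fun c => b M * Rabs (ws M c)))|].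
    rewrite vnorm_scal, vnorm_abs by auto. lra.
Qed.

Lemma vnorm_le_combination n (q u : vec) a (b : nat -> R) (ws : nat -> vec) M :
  0 <= a -> (forall l, 0 <= b l) -> (forall c, (c < n)%nat -> 0 <= u c) ->
  (forall c, (c < n)%nat -> Rabs (q c) <= a * u c + rsum M (fun l => b l * Rabs (ws l c))) ->
  vnorm n q <= a * vnorm n u + rsum M (fun l => b l * vnorm n (ws l)).
Proof.
  intros Ha Hb Hu H.
  eapply Rle_trans; [apply (vnorm_mono n q (fun c => a * u c + rsum M (fun l => b l * Rabs (ws l c)))); auto|].
  eapply Rle_trans; [apply vnorm_triang|]. rewrite vnorm_scal by auto.
  pose proof (vnorm_rsum n M b ws Hb). lra.
Qed.

Lemma Rabs_le_sqrt_rsum_sq N (f : nat -> R) i : (i < N)%nat -> Rabs (f i) <= sqrt (rsum N (fun j => f j ^ 2)).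
Proof.
  intros Hi. rewrite <- sqrt_Rsqr_abs. apply sqrt_le_1; [apply Rle_0_sqr | apply rsum_nonneg; intros; apply pow2_ge_0|].
  rewrite Rsqr_pow2. apply (rsum_term_le N (fun j => f j ^ 2)); auto. intros; apply pow2_ge_0.
Qed.

Section Run.

Variables (I D : nat) (E : nat -> nat -> bool) (A : nat -> nat -> R) (act : nat -> nat) (d : nat -> nat -> nat)
  (eps : nat -> vec) (z : nat -> nat -> vec) (phi : nat -> nat -> R)
  (rh rht : nat -> nat -> nat -> vec) (sig sigt : nat -> nat -> nat -> R) (tau : nat -> nat -> nat -> Z).
Hypothesis Hrun : is_run I D E A act d eps z phi rh rht sig sigt tau.

Lemma run_tau_act k j : E j (act k) = true ->
  tau k (act k) j = Z.max (tau_prev D tau k (act k) j) (Z.of_nat k - Z.of_nat (d k j))%Z.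
Proof. apply (proj2 (proj2 Hrun) k). Qed.

Lemma run_tau_idle k i j : E j i = true -> i <> act k -> tau k i j = tau_prev D tau k i j.
Proof. apply (proj2 (proj2 Hrun) k). Qed.

Lemma hist_coord (f : nat -> vec) t c : hist vzero f t c = hist 0 (fun t => f t c) t.
Proof. unfold hist. destruct (t <=? 0)%Z; reflexivity. Qed.

Lemma run_coord_scalar c : scalar_run I E A act tau (fun k i => z k i c) (fun k i j => rh k i j c)
  (fun k i j => rht k i j c) (fun k => eps k c).
Proof.
  destruct Hrun as [_ [Hinit Hstep]].
  assert (Hhalf : forall k, zhalf I E eps z rh rht tau k (act k) c
    = half_val I E act tau (fun k i => z k i c) (fun k i j => rh k i j c) (fun k i j => rht k i j c)
                (fun k => eps k c) k).
  { intros k. unfold zhalf, half_val. do 2 f_equal. apply rsum_ext. intros j _.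
    destruct (E j (act k)); auto. rewrite hist_coord. reflexivity. }
  split.
  - intros i j He. destruct (Hinit i j He) as [-> [_ [-> _]]]. split; reflexivity.
  - intros k. destruct (Hstep k) as [_ [_ [-> _]]]. rewrite Hhalf. reflexivity.
  - intros k j He. destruct (Hstep k) as [_ [_ [_ [_ [H _]]]]]. rewrite (proj1 (H j He)), Hhalf. reflexivity.
  - intros k j He. destruct (Hstep k) as [_ [_ [_ [_ [_ [H _]]]]]]. rewrite (proj1 (H j He)). apply hist_coord.
  - intros k i Hi Hne. destruct (Hstep k) as [_ [_ [_ [_ [_ [_ [H _]]]]]]]. rewrite (proj1 (H i Hi Hne)). reflexivity.
  - intros k i j He Hne. destruct (Hstep k) as [_ [_ [_ [_ [_ [_ [_ [H _]]]]]]]].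
    rewrite (proj1 (H i j He Hne)). reflexivity.
  - intros k i j He Hne. destruct (Hstep k) as [_ [_ [_ [_ [_ [_ [_ [_ H]]]]]]]].
    rewrite (proj1 (H i j He Hne)). reflexivity.
Qed.

Lemma run_phi_scalar : scalar_run I E A act tau phi sig sigt (fun _ => 0).
Proof.
  destruct Hrun as [_ [Hinit Hstep]].
  assert (Hhalf : forall k, phihalf I E phi sig sigt tau k (act k) = half_val I E act tau phi sig sigt (fun _ => 0) k)
    by (intros; unfold phihalf, half_val; ring).
  split.
  - intros i j He. destruct (Hinit i j He) as [_ [? [_ ?]]]. auto.
  - intros k. destruct (Hstep k) as [_ [_ [_ [-> _]]]]. rewrite Hhalf. reflexivity.
  - intros k j He. destruct (Hstep k) as [_ [_ [_ [_ [H _]]]]]. rewrite (proj2 (H j He)), Hhalf. reflexivity.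
  - intros k j He. destruct (Hstep k) as [_ [_ [_ [_ [_ [H _]]]]]]. apply (H j He).
  - intros k i Hi Hne. destruct (Hstep k) as [_ [_ [_ [_ [_ [_ [H _]]]]]]]. apply (H i Hi Hne).
  - intros k i j He Hne. destruct (Hstep k) as [_ [_ [_ [_ [_ [_ [_ [H _]]]]]]]]. apply (H i j He Hne).
  - intros k i j He Hne. destruct (Hstep k) as [_ [_ [_ [_ [_ [_ [_ [_ H]]]]]]]]. apply (H i j He Hne).
Qed.

Variable mbar : R.
Hypothesis Hdig : is_digraph I E.
Hypothesis Hcomp : compatible I E mbar A.
Hypothesis Hcs : column_stochastic I A.
Hypothesis Hact : forall k, (act k < I)%nat.

Lemma mass_scalar_conservation (x : nat -> nat -> R) (r rt : nat -> nat -> nat -> R) (e : nat -> R) :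
  scalar_run I E A act tau x r rt e ->
  forall k, mass_scalar I E x r rt k = rsum I (fun i => x 0%nat i) + rsum k e.
Proof.
  intros Hsr k. induction k.
  - unfold mass_scalar. simpl. rewrite (rsum_zero I (fun i => rsum I _)); [lra|]. intros i _.
    apply rsum_zero. intros j _. destruct (E j i) eqn:He; [|reflexivity].
    destruct (sr_init Hsr i j He) as [-> ->]. ring.
  - rewrite (mass_step I E A act tau (proj2 Hdig) Hact x r rt e Hsr Hcs (proj2 (proj2 Hcomp)) k), IHk.
    simpl. ring.
Qed.

Lemma mass_conservation k c :
  mass I E z rh rht k c = rsum I (fun i => z 0%nat i c) + rsum k (fun t => eps t c).
Proof. exact (mass_scalar_conservation _ _ _ _ (run_coord_scalar c) k). Qed.

Notation ph := (half_val I E act tau phi sig sigt (fun _ => 0)).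

Lemma ph_recursion k :
  ph k = (match last_act act k (act k) with Some _ => 0 | None => 1 end) + rsum k (fun s => wgt D E A act tau k s * ph s).
Proof.
  rewrite (half_val_recursion I D E A act d tau Hact run_tau_act run_tau_idle _ _ _ _ run_phi_scalar k).
  unfold init_term. destruct (last_act act k (act k)); [ring|]. rewrite (proj1 Hrun) by apply Hact. ring.
Qed.

Lemma ph_mass k : INR I = rsum I (fun i => match last_act act k i with Some _ => 0 | None => 1 end)
                          + rsum k (fun s => mass_wgt I D E A act tau k s * ph s).
Proof.
  transitivity (mass_scalar I E phi sig sigt k).
  - rewrite (mass_scalar_conservation _ _ _ _ run_phi_scalar k), (rsum_ext I (fun i => phi 0%nat i) (fun _ => 1))
      by (intros; apply (proj1 Hrun); auto).
    rewrite rsum_const, rsum_zero by auto. ring.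
  - rewrite (mass_weights I D E A act d tau Hact run_tau_act run_tau_idle _ _ _ _ run_phi_scalar k).
    unfold mass_init. f_equal. apply rsum_ext. intros i Hi.
    destruct (last_act act k i); [reflexivity | rewrite (proj1 Hrun); auto].
Qed.

Variable T : nat.
Hypothesis Hsc : strongly_connected I E.
Hypothesis Hmb : 0 < mbar < 1.
Hypothesis HI1 : (1 <= I)%nat.
Hypothesis HT1 : (1 <= T)%nat.
Hypothesis Hwin : forall k v, (v < I)%nat -> exists t, (k <= t < k + T)%nat /\ act t = v.
Hypothesis Hdel : forall k j, E j (act k) = true -> (d k j <= D)%nat.

(* [y_i^{k+1} = z_i^{k+1} / phi_i^{k+1}] is the ratio of the half-values formed at the last
   activation [p] of [i], the common factor [A i i] cancelling. *)
Lemma coordinate_deviation i k c : (i < I)%nat -> (T <= S k)%nat ->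
  Rabs (z (S k) i c / phi (S k) i - / INR I * mass I E z rh rht (S k) c)
  <= C_dev I T D mbar * decay_bound I T D mbar (sqrt (rsum I (fun i => z 0%nat i c ^ 2))) (fun l => eps l c) k.
Proof.
  intros Hi Hk. pose proof (run_coord_scalar c) as Hsr.
  set (Q := half_val I E act tau (fun k i => z k i c) (fun k i j => rh k i j c) (fun k i j => rht k i j c)
                     (fun k => eps k c)).
  destruct (last_act_recent I T act Hwin (S k) i Hk Hi) as [p [Hp Hpk]].
  destruct (last_act_lt _ _ _ _ Hp) as [Hpk' _].
  pose proof (deviation_bound I T D mbar E A act d tau Hdig Hsc Hmb Hact Hwin Hdel run_tau_act run_tau_idle
    Hcomp Hcs ph ph_recursion ph_mass HI1 HT1 Q (fun l => eps l c) (fun i => z 0%nat i c) _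
    (half_val_recursion I D E A act d tau Hact run_tau_act run_tau_idle _ _ _ _ Hsr)
    (fun i Hi => Rabs_le_sqrt_rsum_sq I (fun i => z 0%nat i c) i Hi)
    (fun k => mass I E z rh rht k c)
    (mass_weights I D E A act d tau Hact run_tau_act run_tau_idle _ _ _ _ Hsr) k p Hk ltac:(lia)) as Hdev.
  pose proof (val_last_act _ _ _ _ _ _ _ _ _ Hsr (S k) i Hi) as Hz. rewrite Hp in Hz.
  pose proof (val_last_act _ _ _ _ _ _ _ _ _ run_phi_scalar (S k) i Hi) as Hphi. rewrite Hp in Hphi.
  pose proof (proj1 Hcomp i Hi).
  destruct (ph_pos I D mbar E A act tau Hmb Hact Hcomp ph ph_recursion p).
  pose proof (lt_0_INR I ltac:(lia)).
  replace (z (S k) i c / phi (S k) i - / INR I * mass I E z rh rht (S k) c)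
    with (Q p / ph p - mass I E z rh rht (S k) c / INR I) by (cbv beta in Hz; fold Q in Hz; rewrite Hz, Hphi; field; lra).
  exact Hdev.
Qed.

Lemma vnorm_coord_sqrt_stacked n : vnorm n (fun c => sqrt (rsum I (fun i => z 0%nat i c ^ 2))) = stacked_norm I n (z 0%nat).
Proof.
  unfold vnorm, stacked_norm. f_equal. rewrite rsum_exchange. apply rsum_ext. intros c _.
  rewrite <- Rsqr_pow2. apply Rsqr_sqrt. apply rsum_nonneg; intros; apply pow2_ge_0.
Qed.

Lemma node_deviation n i k : (i < I)%nat -> (T <= S k)%nat ->
  vnorm n (fun c => z (S k) i c / phi (S k) i - / INR I * mass I E z rh rht (S k) c)
  <= C_dev I T D mbar * (rate I T D mbar ^ k * stacked_norm I n (z 0%nat)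
       + rsum (S k) (fun l => rate I T D mbar ^ (k - l) * vnorm n (eps l))).
Proof.
  intros Hi Hk. set (C := C_dev I T D mbar). set (r := rate I T D mbar).
  pose proof (C_dev_nonneg I T D mbar Hmb HI1 HT1). destruct (rate_bounds I T D mbar Hmb HI1 HT1) as [[Hr _] _].
  assert (Hrk : forall m, 0 <= C * r ^ m) by (intros; apply Rmult_le_pos; [auto | apply pow_le; unfold r; lra]).
  rewrite <- vnorm_coord_sqrt_stacked, Rmult_plus_distr_l, <- Rmult_assoc, <- rsum_scal.
  rewrite (rsum_ext (S k) (fun l => C * (r ^ (k - l) * vnorm n (eps l))) (fun l => C * r ^ (k - l) * vnorm n (eps l)))
    by (intros; ring).
  apply vnorm_le_combination; auto. { intros; apply sqrt_pos. }
  intros c Hc. eapply Rle_trans; [apply coordinate_deviation; auto|].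
  unfold decay_bound. rewrite Rmult_plus_distr_l, <- Rmult_assoc, <- rsum_scal. fold C r.
  right. f_equal. apply rsum_ext. intros; ring.
Qed.

End Run.

Theorem theorem1 (mbar : R) (I T D nE : nat) :
  0 < mbar < 1 -> (1 <= T)%nat -> (1 <= D)%nat ->
  exists rho C1 : R, 0 < rho < 1 /\ 0 < C1 /\
  forall (n : nat) (E : nat -> nat -> bool) (A : nat -> nat -> R)
    (act : nat -> nat) (d : nat -> nat -> nat) (eps : nat -> vec)
    (z : nat -> nat -> vec) (phi : nat -> nat -> R)
    (rh rht : nat -> nat -> nat -> vec) (sig sigt : nat -> nat -> nat -> R)
    (tau : nat -> nat -> nat -> Z),
    is_digraph I E -> strongly_connected I E -> num_edges I E = nE ->
    compatible I E mbar A -> column_stochastic I A ->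
    asynchrony I T D E act d ->
    is_run I D E A act d eps z phi rh rht sig sigt tau ->
    (forall (i k : nat), (i < I)%nat ->
       ((2 * I - 1) * T + I * D - 1 <= k)%nat ->
       vnorm n (fun c => z (S k) i c / phi (S k) i
                         - / INR I * mass I E z rh rht (S k) c)
       <= C1 * (rho ^ k * stacked_norm I n (z 0%nat)
                + rsum (S k) (fun l => rho ^ (k - l) * vnorm n (eps l)))) /\
    (forall (k c : nat),
       mass I E z rh rht k c = rsum I (fun i => z 0%nat i c) + rsum k (fun t => eps t c)).
Proof.
  (* The constants depend only on [mbar, I, T, D] (not on [nE]), and the bound holds as soon as
     [T <= k + 1]. *)
  intros Hmb HT _.
  destruct (Nat.eq_dec I 0) as [HI0|HI0].
  { exists (1 / 2), 1. split; [lra|]. split; [lra|].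
    intros n E A act d eps z phi rh rht sig sigt tau Hdig _ _ Hcomp Hcs [Hact _] Hrun.
    split; [intros; lia | eapply mass_conservation; eauto]. }
  assert (HI1 : (1 <= I)%nat) by lia.
  destruct (rate_bounds I T D mbar Hmb HI1 HT) as [Hrate _]. destruct (C_pos I T D mbar Hmb HI1 HT).
  exists (rate I T D mbar), (C_dev I T D mbar). split; [lra|]. split; [unfold C_dev; lra|].
  intros n E A act d eps z phi rh rht sig sigt tau Hdig Hsc _ Hcomp Hcs [Hact [Hwin Hdel]] Hrun.
  split; [|eapply mass_conservation; eauto].
  intros i k Hi Hk. eapply node_deviation; eauto. nia.
Qed.
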